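(* Let $(C,\xi):(\Delta,+,0)\to(\mathbf{Cat},\times,\mathbf{1})$ be a homotopy monoid in $\mathbf{Cat}$ (a homotopy monoidal category). Then the category $C(1)$ can be given the structure of a (not necessarily strict) monoidal category.
   Context: $\mathbf{Cat}$ is the category of small categories and functors, with cartesian product $\times$, terminal category $\mathbf{1}$, and equivalences of categories as its equivalences. $\Delta$: objects $n=\{0,\dots,n-1\}$ ($n\ge0$), order-preserving maps, monoidal under ordinal sum $+$ with unit $0$. A homotopy monoid in $\mathbf{Cat}$ is a colax monoidal functor $(C,\xi):(\Delta,+,0)\to(\mathbf{Cat},\times,\mathbf{1})$ — a functor $C$ together with functors $\xi_{m,n}:C(m+n)\to C(m)\times C(n)$, natural in $m,n$, and $\xi_0:C(0)\to\mathbf{1}$, satisfying the coassociativity and counit axioms of a monoidal functor (not required to be invertible) — such that each $\xi_{m,n}$ and $\xi_0$ is an equivalence of categories. *)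

From Stdlib Require Import JMeq.
From HB Require Import structures.
From mathcomp Require Import all_boot zify.

Set Implicit Arguments.
Unset Strict Implicit.
Unset Printing Implicit Defensive.

Record Category := {
  ob : Type;
  hom : ob -> ob -> Type;
  idm : forall a, hom a a;
  cmp : forall a b c, hom b c -> hom a b -> hom a c;
  cmp_id_l : forall a b (f : hom a b), cmp (idm b) f = f;
  cmp_id_r : forall a b (f : hom a b), cmp f (idm a) = f;
  cmp_assoc : forall a b c d (h : hom c d) (g : hom b c) (f : hom a b),
      cmp h (cmp g f) = cmp (cmp h g) f }.
Coercion ob : Category >-> Sortclass.
Arguments hom {c} _ _ : rename.
Arguments idm {c} _ : rename.
Arguments cmp {c a b c0} _ _ : rename.

Record Functor (A B : Category) := {
  fob : A -> B;
  fmap : forall a b, hom a b -> hom (fob a) (fob b);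
  fmap_id : forall a, fmap (idm a) = idm (fob a);
  fmap_cmp : forall a b c (g : hom b c) (f : hom a b),
      fmap (cmp g f) = cmp (fmap g) (fmap f) }.
Coercion fob : Functor >-> Funclass.
Arguments fmap {A B} F {a b} f : rename.

Definition Feq (A B : Category) (F G : Functor A B) : Prop :=
  (forall a, F a = G a) /\
  (forall a b (f : hom a b), JMeq (fmap F f) (fmap G f)).

Definition FId (A : Category) : Functor A A.
Proof.
refine {| fob := fun a => a; fmap := fun a b f => f |}.
- by [].
- by [].
Defined.

Definition FComp (A B D : Category) (G : Functor B D) (F : Functor A B)
  : Functor A D.
Proof.
refine {| fob := fun a => G (F a); fmap := fun a b f => fmap G (fmap F f) |}.
- by move=> a; rewrite !fmap_id.
- by move=> a b c g f; rewrite !fmap_cmp.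
Defined.

Record NatTrans (A B : Category) (F G : Functor A B) := {
  ntc : forall a, hom (F a) (G a);
  ntc_natural : forall a b (f : hom a b),
      cmp (fmap G f) (ntc a) = cmp (ntc b) (fmap F f) }.
Arguments ntc {A B F G} n a : rename.

Definition is_iso (D : Category) (a b : D) (f : hom a b) : Prop :=
  exists g : hom b a, cmp g f = idm a /\ cmp f g = idm b.

Definition is_natiso (A B : Category) (F G : Functor A B)
  (n : NatTrans F G) : Prop := forall a, is_iso (ntc n a).

Definition is_equivalence (A B : Category) (F : Functor A B) : Prop :=
  exists (G : Functor B A) (u : NatTrans (FId A) (FComp G F))
         (c : NatTrans (FComp F G) (FId B)),
    is_natiso u /\ is_natiso c.

Definition TermCat : Category.
Proof.
refine {| ob := unit; hom := fun _ _ => unit;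
          idm := fun _ => tt; cmp := fun _ _ _ _ _ => tt |}.
- by move=> a b [].
- by move=> a b [].
- by [].
Defined.

Definition ToTerm (A : Category) : Functor A TermCat.
Proof.
refine {| fob := fun _ => (tt : TermCat); fmap := fun _ _ _ => (tt : hom (tt : TermCat) tt) |}.
- by [].
- by [].
Defined.

Definition ProdCat (A B : Category) : Category.
Proof.
refine {| ob := (A * B)%type;
          hom := fun x y : (A * B)%type => (hom x.1 y.1 * hom x.2 y.2)%type;
          idm := fun x : (A * B)%type => (idm x.1, idm x.2);
          cmp := fun (x y z : (A * B)%type) (g : (hom y.1 z.1 * hom y.2 z.2)%type)
                     (f : (hom x.1 y.1 * hom x.2 y.2)%type) =>
                   (cmp g.1 f.1, cmp g.2 f.2) |}.
- by move=> a b [f1 f2] /=; rewrite !cmp_id_l.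
- by move=> a b [f1 f2] /=; rewrite !cmp_id_r.
- by move=> a b c d [h1 h2] [g1 g2] [f1 f2] /=; rewrite !cmp_assoc.
Defined.

Definition FPair (A B D : Category) (F : Functor A B) (G : Functor A D)
  : Functor A (ProdCat B D).
Proof.
refine {| fob := fun a => ((F a, G a) : ProdCat B D);
          fmap := fun a b f =>
            ((fmap F f, fmap G f) : @hom (ProdCat B D) (F a, G a) (F b, G b)) |}.
- by move=> a /=; rewrite !fmap_id.
- by move=> a b c g f /=; rewrite !fmap_cmp.
Defined.

Definition FProd (A A' B B' : Category) (F : Functor A B) (G : Functor A' B')
  : Functor (ProdCat A A') (ProdCat B B').
Proof.
refine {| fob := fun x : ProdCat A A' => ((F x.1, G x.2) : ProdCat B B');
          fmap := fun (x y : ProdCat A A') (f : @hom (ProdCat A A') x y) =>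
            ((fmap F f.1, fmap G f.2)
               : @hom (ProdCat B B') (F x.1, G x.2) (F y.1, G y.2)) |}.
- by move=> a /=; rewrite !fmap_id.
- by move=> a b c g f /=; rewrite !fmap_cmp.
Defined.

Definition FAssocR (A B D : Category)
  : Functor (ProdCat (ProdCat A B) D) (ProdCat A (ProdCat B D)).
Proof.
refine {| fob := fun x : ProdCat (ProdCat A B) D => ((x.1.1, (x.1.2, x.2)) : ProdCat A (ProdCat B D));
          fmap := fun (x y : ProdCat (ProdCat A B) D) (f : @hom (ProdCat (ProdCat A B) D) x y) =>
            ((f.1.1, (f.1.2, f.2))
              : @hom (ProdCat A (ProdCat B D)) (x.1.1, (x.1.2, x.2))
                                               (y.1.1, (y.1.2, y.2))) |}.
- by [].
- by [].
Defined.

Definition FAssocL (A B D : Category)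
  : Functor (ProdCat A (ProdCat B D)) (ProdCat (ProdCat A B) D).
Proof.
refine {| fob := fun x : ProdCat A (ProdCat B D) => (((x.1, x.2.1), x.2.2) : ProdCat (ProdCat A B) D);
          fmap := fun (x y : ProdCat A (ProdCat B D)) (f : @hom (ProdCat A (ProdCat B D)) x y) =>
            (((f.1, f.2.1), f.2.2)
              : @hom (ProdCat (ProdCat A B) D) ((x.1, x.2.1), x.2.2)
                                               ((y.1, y.2.1), y.2.2)) |}.
- by [].
- by [].
Defined.

Definition FConst (A B : Category) (b : B) : Functor A B.
Proof.
refine {| fob := fun _ => b; fmap := fun _ _ _ => idm b |}.
- by [].
- by move=> *; rewrite cmp_id_l.
Defined.

Section MonoidalHelpers.
Variables (D : Category) (T : Functor (ProdCat D D) D).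

Definition tens (a b : D) : D := T ((a, b) : ProdCat D D).
Definition tensm (a a' b b' : D) (f : hom a a') (g : hom b b')
  : hom (tens a b) (tens a' b') :=
  fmap T ((f, g) : @hom (ProdCat D D) (a, b) (a', b')).

Definition AssocSrc := FComp T (FProd T (FId D)).
Definition AssocTgt := FComp T (FComp (FProd (FId D) T) (@FAssocR D D D)).
Definition LUnitSrc (i : D) := FComp T (FPair (FConst D i) (FId D)).
Definition RUnitSrc (i : D) := FComp T (FPair (FId D) (FConst D i)).

Definition assoc_at (al : NatTrans AssocSrc AssocTgt) (a b c : D)
  : hom (tens (tens a b) c) (tens a (tens b c)) :=
  ntc al ((((a, b) : ProdCat D D), c) : ProdCat (ProdCat D D) D).
Definition lunit_at (i : D) (l : NatTrans (LUnitSrc i) (FId D)) (a : D)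
  : hom (tens i a) a := ntc l a.
Definition runit_at (i : D) (r : NatTrans (RUnitSrc i) (FId D)) (a : D)
  : hom (tens a i) a := ntc r a.
End MonoidalHelpers.

Record MonoidalStructure (D : Category) := {
  tensor : Functor (ProdCat D D) D;
  munit : D;
  (* associator  (x (x) y) (x) z  ->  x (x) (y (x) z) *)
  assoc : NatTrans (AssocSrc tensor) (AssocTgt tensor);
  lunit : NatTrans (LUnitSrc tensor munit) (FId D);
  runit : NatTrans (RUnitSrc tensor munit) (FId D);
  assoc_iso : is_natiso assoc;
  lunit_iso : is_natiso lunit;
  runit_iso : is_natiso runit;
  pentagon : forall w x y z : D,
    cmp (assoc_at assoc w x (tens tensor y z))
        (assoc_at assoc (tens tensor w x) y z)
    = cmp (tensm tensor (idm w) (assoc_at assoc x y z))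
       (cmp (assoc_at assoc w (tens tensor x y) z)
            (tensm tensor (assoc_at assoc w x y) (idm z)));
  triangle : forall x y : D,
    cmp (tensm tensor (idm x) (lunit_at lunit y)) (assoc_at assoc x munit y)
    = tensm tensor (runit_at runit x) (idm y) }.

(** * The simplex category Delta (objects n = {0,...,n-1}, n >= 0,
      order-preserving maps), monoidal under ordinal sum. *)

Definition monob (m n : nat) (f : {ffun 'I_m -> 'I_n}) : bool :=
  [forall i : 'I_m, forall j : 'I_m, (i <= j) ==> (f i <= f j)].

Definition DHom (m n : nat) := {f : {ffun 'I_m -> 'I_n} | monob f}.

Lemma monobP (m n : nat) (f : {ffun 'I_m -> 'I_n}) :
  reflect (forall i j : 'I_m, i <= j -> f i <= f j) (monob f).
Proof.
apply: (iffP forallP) => H.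
- by move=> i j le; move/forallP: (H i) => /(_ j) /implyP; apply.
- by move=> i; apply/forallP => j; apply/implyP; apply: H.
Qed.

Definition did (n : nat) : DHom n n.
Proof.
exists [ffun i => i]; apply/monobP => i j; by rewrite !ffunE.
Defined.

Definition dcomp (m n p : nat) (g : DHom n p) (f : DHom m n) : DHom m p.
Proof.
exists [ffun i => sval g (sval f i)]; apply/monobP => i j le; rewrite !ffunE.
by apply/(monobP _ (svalP g))/(monobP _ (svalP f)).
Defined.

Lemma dhom_eq (m n : nat) (f g : DHom m n) : (forall i, sval f i = sval g i) -> f = g.
Proof. by move=> H; apply: val_inj; apply/ffunP. Qed.

Definition Delta : Category.
Proof.
refine {| ob := nat; hom := DHom; idm := did; cmp := dcomp |}.
- by move=> a b f; apply: dhom_eq => i /=; rewrite !ffunE.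
- by move=> a b f; apply: dhom_eq => i /=; rewrite !ffunE.
- by move=> a b c d h g f; apply: dhom_eq => i /=; rewrite !ffunE.
Defined.

Definition dplus_fun (m m' n n' : nat) (f : DHom m n) (g : DHom m' n')
  (i : 'I_(m + m')) : 'I_(n + n') :=
  match split i with
  | inl a => lshift n' (sval f a)
  | inr b => rshift n (sval g b)
  end.

Lemma dplus_mono (m m' n n' : nat) (f : DHom m n) (g : DHom m' n') :
  monob [ffun i => dplus_fun f g i].
Proof.
apply/monobP => i j le; rewrite !ffunE /dplus_fun.
case: splitP => [a Ha|b Hb]; case: splitP => [a' Ha'|b' Hb'] /=.
- by apply/(monobP _ (svalP f)); rewrite -Ha -Ha'.
- by apply: leq_trans (ltnW (ltn_ord _)) (leq_addr _ _).
- by exfalso; move: le; rewrite Hb Ha'; have := ltn_ord a'; lia.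
- rewrite leq_add2l; apply/(monobP _ (svalP g)).
  by move: le; rewrite Hb Hb' leq_add2l.
Qed.

Definition dplus (m m' n n' : nat) (f : DHom m n) (g : DHom m' n')
  : DHom (m + m') (n + n') := exist (fun h => is_true (monob h)) _ (dplus_mono f g).

Definition dcast (m n : nat) (e : m = n) : DHom m n.
Proof.
exists [ffun i => cast_ord e i]; apply/monobP => i j; by rewrite !ffunE.
Defined.

Definition dassoc (m n p : nat) : DHom (m + n + p) (m + (n + p)) :=
  dcast (esym (addnA m n p)).
Definition dlunit (n : nat) : DHom (0 + n) n := dcast (add0n n).
Definition drunit (n : nat) : DHom (n + 0) n := dcast (addn0 n).

(** A colax monoidal functor (C, xi) : (Delta, +, 0) -> (Cat, x, 1):
  a functor C : Delta -> Cat with functors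
  xi_{m,n} : C(m+n) -> C(m) x C(n) natural in m, n and xi_0 : C(0) -> 1,
  satisfying coassociativity and counitality (equalities of functors, i.e.
  equalities in the 1-category Cat), such that every xi_{m,n} and xi_0 is an
  equivalence of categories. *)

Record HomotopyMonoid := {
  HC : nat -> Category;
  HCmap : forall m n : nat, DHom m n -> Functor (HC m) (HC n);
  HCmap_id : forall n, Feq (HCmap (did n)) (FId (HC n));
  HCmap_comp : forall m n p (g : DHom n p) (f : DHom m n),
      Feq (HCmap (dcomp g f)) (FComp (HCmap g) (HCmap f));
  xi : forall m n : nat, Functor (HC (m + n)) (ProdCat (HC m) (HC n));
  xi0 : Functor (HC 0) TermCat;
  xi_natural : forall m m' n n' (f : DHom m m') (g : DHom n n'),
      Feq (FComp (FProd (HCmap f) (HCmap g)) (xi m n))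
          (FComp (xi m' n') (HCmap (dplus f g)));
  xi_coassoc : forall m n p,
      Feq (FComp (FProd (xi m n) (FId (HC p))) (xi (m + n) p))
          (FComp (@FAssocL (HC m) (HC n) (HC p))
            (FComp (FProd (FId (HC m)) (xi n p))
              (FComp (xi m (n + p)) (HCmap (dassoc m n p)))));
  xi_counit_l : forall n,
      Feq (FComp (FProd xi0 (FId (HC n))) (xi 0 n))
          (FComp (FPair (ToTerm (HC n)) (FId (HC n))) (HCmap (dlunit n)));
  xi_counit_r : forall n,
      Feq (FComp (FProd (FId (HC n)) xi0) (xi n 0))
          (FComp (FPair (FId (HC n)) (ToTerm (HC n))) (HCmap (drunit n)));
  xi_equiv : forall m n, is_equivalence (xi m n);
  xi0_equiv : is_equivalence xi0 }.

(* Let [s] be a quasi-inverse of the equivalence [xi 1 1] and [mu] the image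
   under [C] of the map 2 -> 1 of Delta. The tensor product of C(1) is
   [a (x) b := mu (s (a, b))], and its unit is the image under C(0 -> 1) of the
   essentially unique object of C(0).

   For an associator at (a, b, c) pick [t] in C(3) with [xi 2 1 t] isomorphic
   to [(s (a, b), c)]. Naturality of [xi] along the two faces 3 -> 2 and
   coassociativity identify [s (a (x) b, c)] and [s (a, b (x) c)] with the two
   faces of [t]; these have the same image in C(1) because both composites
   3 -> 2 -> 1 agree, so [mu] turns the two identifications into an isomorphism
   [(a (x) b) (x) c -> a (x) (b (x) c)]. It does not depend on [t] because
   [xi 2 1] is full, and it is natural. The pentagon follows by computing all
   five associators from one object of C(4) over (w, x, y, z), and the triangle
   from the map 2 -> 3 inserting the unit in the middle, the unitors coming
   from the counit axioms. *)

From Stdlib Require Import JMeq ProofIrrelevance IndefiniteDescription.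
From mathcomp Require Import all_boot zify.

Set Implicit Arguments.
Unset Strict Implicit.
Unset Printing Implicit Defensive.

Definition hom_of_eq (D : Category) (a b : D) (e : a = b) : hom a b :=
  match e in _ = y return hom a y with erefl => idm a end.

(* The axioms of a homotopy monoid identify objects only up to propositional
   equality, so morphisms are compared up to the casts [hom_of_eq]. *)
Definition heq (D : Category) (a b a' b' : D) (f : hom a b) (g : hom a' b') : Prop :=
  exists (ea : a = a') (eb : b = b'), cmp (hom_of_eq eb) f = cmp g (hom_of_eq ea).

Section HeterogeneousEquality.
Variable D : Category.
Implicit Types a b c : D.

Lemma heq_refl a b (f : hom a b) : heq f f.
Proof. by exists erefl, erefl; rewrite /= cmp_id_l cmp_id_r. Qed.

Lemma heq_eq a b (f g : hom a b) : heq f g -> f = g.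
Proof. by case=> ea [eb]; rewrite (UIP_refl _ _ ea) (UIP_refl _ _ eb) /= cmp_id_l cmp_id_r. Qed.

Lemma heq_sym a b a' b' (f : hom a b) (g : hom a' b') : heq f g -> heq g f.
Proof.
by case=> ea [eb]; destruct ea, eb => /=; rewrite cmp_id_l cmp_id_r => ->; apply: heq_refl.
Qed.

Lemma heq_trans a b a' b' a'' b'' (f : hom a b) (g : hom a' b') (h : hom a'' b'') :
  heq f g -> heq g h -> heq f h.
Proof.
by case=> ea [eb]; destruct ea, eb => /=; rewrite cmp_id_l cmp_id_r => ->.
Qed.

Lemma heq_cmp a b c a' b' c' (f : hom a b) (g : hom b c) (f' : hom a' b') (g' : hom b' c') :
  heq f f' -> heq g g' -> heq (cmp g f) (cmp g' f').
Proof.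
case=> ea [eb]; destruct ea, eb => /= Ef [eb [ec]]; rewrite (UIP_refl _ _ eb); destruct ec => /= Eg.
by move: Ef Eg; rewrite !cmp_id_l !cmp_id_r => -> ->; apply: heq_refl.
Qed.

Lemma heq_hom_of_eq a b (e : a = b) : heq (hom_of_eq e) (idm a).
Proof. by case: b / e; apply: heq_refl. Qed.

Lemma heq_idm a a' : a = a' -> heq (idm a) (idm a').
Proof. by move->; apply: heq_refl. Qed.

Lemma heq_cast_l a b c (e : b = c) (f : hom a b) : heq (cmp (hom_of_eq e) f) f.
Proof. by case: c / e; rewrite /= cmp_id_l; apply: heq_refl. Qed.

Lemma heq_cast_r a b c (e : a = b) (f : hom b c) : heq (cmp f (hom_of_eq e)) f.
Proof. by case: b / e f => f; rewrite /= cmp_id_r; apply: heq_refl. Qed.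

Lemma heq_cmp1f a b (f : hom a b) : heq (cmp (idm b) f) f.
Proof. by rewrite cmp_id_l; apply: heq_refl. Qed.

Lemma heq_cmpf1 a b (f : hom a b) : heq (cmp f (idm a)) f.
Proof. by rewrite cmp_id_r; apply: heq_refl. Qed.

Lemma hom_of_eq_refl a (e : a = a) : hom_of_eq e = idm a.
Proof. by rewrite (UIP_refl _ _ e). Qed.

Lemma heq_castE a b a' b' (f : hom a b) (g : hom a' b') (ea : a = a') (eb : b = b') :
  heq f g -> cmp (hom_of_eq eb) f = cmp g (hom_of_eq ea).
Proof. by case=> ea' [eb' E]; rewrite (proof_irrelevance _ ea ea') (proof_irrelevance _ eb eb'). Qed.

Lemma heq_castVE a b a' b' (f : hom a b) (g : hom a' b') (ea : a' = a) (eb : b' = b) :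
  heq f g -> cmp f (hom_of_eq ea) = cmp (hom_of_eq eb) g.
Proof.
case=> ea' [eb']; destruct ea', eb' => /=.
by rewrite !hom_of_eq_refl !cmp_id_l !cmp_id_r.
Qed.
End HeterogeneousEquality.

Lemma heq_fmap (A B : Category) (F : Functor A B) (a b a' b' : A) (f : hom a b) (g : hom a' b') :
  heq f g -> heq (fmap F f) (fmap F g).
Proof.
by case=> ea [eb]; destruct ea, eb => /=; rewrite cmp_id_l cmp_id_r => ->; apply: heq_refl.
Qed.

Lemma fmap_hom_of_eq (A B : Category) (F : Functor A B) (a b : A) (e : a = b) :
  fmap F (hom_of_eq e) = hom_of_eq (f_equal F e).
Proof. by case: b / e; rewrite /= fmap_id. Qed.

Lemma Feq_ob (A B : Category) (F G : Functor A B) : Feq F G -> forall a, F a = G a.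
Proof. by case. Qed.

Lemma Feq_heq (A B : Category) (F G : Functor A B) :
  Feq F G -> forall a b (f : hom a b), heq (fmap F f) (fmap G f).
Proof.
case=> Eo Em a b f; move: (fmap G f) (Em a b f).
rewrite -(Eo a) -(Eo b) => g J.
by rewrite -(JMeq_eq J); apply: heq_refl.
Qed.

Definition phom (A B : Category) (a1 b1 : A) (a2 b2 : B) (f1 : hom a1 b1) (f2 : hom a2 b2)
  : @hom (ProdCat A B) (a1, a2) (b1, b2) := (f1, f2).

Section ProductMorphisms.
Variables A B : Category.
Implicit Types x y z : ProdCat A B.

Lemma heq_phom (a1 b1 a1' b1' : A) (a2 b2 a2' b2' : B) (f1 : hom a1 b1) (f2 : hom a2 b2)
    (g1 : hom a1' b1') (g2 : hom a2' b2') :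
  heq f1 g1 -> heq f2 g2 -> heq (phom f1 f2) (phom g1 g2).
Proof.
case=> ea [eb]; destruct ea, eb => /=; rewrite cmp_id_l cmp_id_r => ->.
by case=> ea [eb]; destruct ea, eb => /=; rewrite cmp_id_l cmp_id_r => ->; apply: heq_refl.
Qed.

Lemma heq_fst x y x' y' (f : hom x y) (g : hom x' y') :
  heq f g -> heq (f.1 : hom x.1 y.1) (g.1 : hom x'.1 y'.1).
Proof. by case=> ea [eb]; destruct ea, eb; rewrite cmp_id_l cmp_id_r => ->; apply: heq_refl. Qed.

Lemma heq_snd x y x' y' (f : hom x y) (g : hom x' y') :
  heq f g -> heq (f.2 : hom x.2 y.2) (g.2 : hom x'.2 y'.2).
Proof. by case=> ea [eb]; destruct ea, eb; rewrite cmp_id_l cmp_id_r => ->; apply: heq_refl. Qed.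

Lemma heq_pair x y x' y' (f : hom x y) (g : hom x' y') :
  heq (f.1 : hom x.1 y.1) (g.1 : hom x'.1 y'.1) ->
  heq (f.2 : hom x.2 y.2) (g.2 : hom x'.2 y'.2) -> heq f g.
Proof.
case: x y x' y' f g => [x1 x2] [y1 y2] [x1' x2'] [y1' y2'] [f1 f2] [g1 g2].
exact: heq_phom.
Qed.

Lemma hom_of_eq_fst x y (e : x = y) : ((hom_of_eq e).1 : hom x.1 y.1) = hom_of_eq (f_equal fst e).
Proof. by destruct e. Qed.

Lemma hom_of_eq_snd x y (e : x = y) : ((hom_of_eq e).2 : hom x.2 y.2) = hom_of_eq (f_equal snd e).
Proof. by destruct e. Qed.

Lemma cmp_fst x y z (g : hom y z) (f : hom x y) :
  ((cmp g f).1 : hom x.1 z.1) = cmp (g.1 : hom y.1 z.1) (f.1 : hom x.1 y.1).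
Proof. by []. Qed.

Lemma cmp_snd x y z (g : hom y z) (f : hom x y) :
  ((cmp g f).2 : hom x.2 z.2) = cmp (g.2 : hom y.2 z.2) (f.2 : hom x.2 y.2).
Proof. by []. Qed.

Lemma phom_fst (a1 b1 : A) (a2 b2 : B) (f1 : hom a1 b1) (f2 : hom a2 b2) :
  ((phom f1 f2).1 : hom a1 b1) = f1.
Proof. by []. Qed.

Lemma phom_snd (a1 b1 : A) (a2 b2 : B) (f1 : hom a1 b1) (f2 : hom a2 b2) :
  ((phom f1 f2).2 : hom a2 b2) = f2.
Proof. by []. Qed.

Lemma phom_cmp (a1 b1 c1 : A) (a2 b2 c2 : B) (f1 : hom a1 b1) (g1 : hom b1 c1)
    (f2 : hom a2 b2) (g2 : hom b2 c2) :
  cmp (phom g1 g2) (phom f1 f2) = phom (cmp g1 f1) (cmp g2 f2).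
Proof. by []. Qed.

Lemma phom_cmpA (a1 b1 c1 : A) (a2 b2 c2 : B) d (f1 : hom a1 b1) (g1 : hom b1 c1)
    (f2 : hom a2 b2) (g2 : hom b2 c2) (h : hom d ((a1, a2) : ProdCat A B)) :
  cmp (phom g1 g2) (cmp (phom f1 f2) h) = cmp (phom (cmp g1 f1) (cmp g2 f2)) h.
Proof. by rewrite cmp_assoc. Qed.

Lemma phom_idm (a : A) (b : B) : phom (idm a) (idm b) = idm ((a, b) : ProdCat A B).
Proof. by []. Qed.
End ProductMorphisms.

Definition inv (D : Category) (a b : D) (f : hom a b) (H : is_iso f) : hom b a :=
  proj1_sig (constructive_indefinite_description _ H).

Section Isomorphisms.
Variable D : Category.
Implicit Types a b c d : D.

Lemma cmpVf a b (f : hom a b) (H : is_iso f) : cmp (inv H) f = idm a.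
Proof. by rewrite /inv; case: constructive_indefinite_description => g []. Qed.

Lemma cmpfV a b (f : hom a b) (H : is_iso f) : cmp f (inv H) = idm b.
Proof. by rewrite /inv; case: constructive_indefinite_description => g []. Qed.

Lemma iso_idm a : is_iso (idm a).
Proof. by exists (idm a); rewrite cmp_id_l. Qed.

Lemma iso_cmp a b c (f : hom a b) (g : hom b c) : is_iso f -> is_iso g -> is_iso (cmp g f).
Proof.
case=> f' [f1 f2] [g' [g1 g2]]; exists (cmp f' g'); split.
- by rewrite cmp_assoc -(cmp_assoc f') g1 cmp_id_r f1.
- by rewrite cmp_assoc -(cmp_assoc g) f2 cmp_id_r g2.
Qed.

Lemma iso_hom_of_eq a b (e : a = b) : is_iso (hom_of_eq e).
Proof. by destruct e; apply: iso_idm. Qed.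

Lemma iso_inv a b (f : hom a b) (H : is_iso f) : is_iso (inv H).
Proof. by exists f; rewrite cmpVf cmpfV. Qed.

Lemma iso_square a b c d (f : hom a b) (g : hom c d) (u : hom b d) (v : hom a c)
    (Hu : is_iso u) (Hv : is_iso v) :
  cmp u f = cmp g v -> cmp f (inv Hv) = cmp (inv Hu) g.
Proof.
move=> E; rewrite -[cmp f (inv Hv)]cmp_id_l -(cmpVf Hu) -cmp_assoc (cmp_assoc u) E.
by rewrite -!cmp_assoc cmpfV cmp_id_r.
Qed.

Lemma heq_cmp_idm_l a b c a' c' (f : hom b c) (g : hom a b) (h : hom a' c') :
  heq f (idm c') -> heq g h -> heq (cmp f g) h.
Proof. by move=> H1 H2; apply: heq_trans (heq_cmp H2 H1) _; rewrite cmp_id_l; apply: heq_refl. Qed.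

Lemma heq_cmpV a b c d (g : hom a b) (h : hom c d) (k : hom a c) (Hg : is_iso g) (Hh : is_iso h) :
  heq g (cmp h k) -> heq (cmp k (inv Hg)) (inv Hh).
Proof.
case=> ea [eb]; rewrite (UIP_refl _ _ ea); destruct eb; rewrite /= cmp_id_l cmp_id_r => E.
have E1 : cmp h (cmp k (inv Hg)) = idm _ by rewrite cmp_assoc -E cmpfV.
by rewrite -[cmp k (inv Hg)]cmp_id_l -(cmpVf Hh) -cmp_assoc E1 cmp_id_r; apply: heq_refl.
Qed.
End Isomorphisms.

Lemma iso_fmap (A B : Category) (F : Functor A B) (a b : A) (f : hom a b) :
  is_iso f -> is_iso (fmap F f).
Proof. by case=> g [g1 g2]; exists (fmap F g); rewrite -!fmap_cmp g1 g2 !fmap_id. Qed.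

Lemma fmap_cmpfV (A B : Category) (F : Functor A B) (a b : A) (f : hom a b) (Hf : is_iso f) :
  cmp (fmap F f) (fmap F (inv Hf)) = idm _.
Proof. by rewrite -fmap_cmp cmpfV fmap_id. Qed.

Lemma fmap_cmpfVA (A B : Category) (F : Functor A B) (a b : A) (f : hom a b) (Hf : is_iso f)
    (c : B) (g : hom c (F b)) :
  cmp (fmap F f) (cmp (fmap F (inv Hf)) g) = g.
Proof. by rewrite cmp_assoc fmap_cmpfV cmp_id_l. Qed.

Lemma heq_fmap_cmpfV (A B : Category) (F : Functor A B) (a b b' : A) (f : hom a b) (g : hom a b')
    (Hg : is_iso g) :
  heq f g -> heq (cmp (fmap F f) (fmap F (inv Hg))) (idm (F b')).
Proof.
case=> ea [eb]; rewrite (UIP_refl _ _ ea); destruct eb; rewrite /= cmp_id_l cmp_id_r => ->.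
by rewrite fmap_cmpfV; apply: heq_refl.
Qed.

Section ProductIsomorphisms.
Variables A B : Category.

Lemma iso_phom (a1 b1 : A) (a2 b2 : B) (f1 : hom a1 b1) (f2 : hom a2 b2) :
  is_iso f1 -> is_iso f2 -> is_iso (phom f1 f2).
Proof. by case=> g1 [h1 h1'] [g2 [h2 h2']]; exists (phom g1 g2); rewrite /phom /= h1 h1' h2 h2'. Qed.

Lemma iso_fst (x y : ProdCat A B) (f : hom x y) : is_iso f -> is_iso (f.1 : hom x.1 y.1).
Proof. by case=> g [h1 h2]; exists g.1; split; [apply: (f_equal fst h1) | apply: (f_equal fst h2)]. Qed.

Lemma iso_snd (x y : ProdCat A B) (f : hom x y) : is_iso f -> is_iso (f.2 : hom x.2 y.2).
Proof. by case=> g [h1 h2]; exists g.2; split; [apply: (f_equal snd h1) | apply: (f_equal snd h2)]. Qed.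
End ProductIsomorphisms.

Record EquivData (A B : Category) (F : Functor A B) := {
  eqv_inv : Functor B A;
  eqv_unit : NatTrans (FId A) (FComp eqv_inv F);
  eqv_counit : NatTrans (FComp F eqv_inv) (FId B);
  eqv_unit_iso : is_natiso eqv_unit;
  eqv_counit_iso : is_natiso eqv_counit }.

Lemma equivalence_data (A B : Category) (F : Functor A B) :
  is_equivalence F -> inhabited (EquivData F).
Proof. by case=> G [u [c [Hu Hc]]]; constructor; apply: (Build_EquivData Hu Hc). Qed.

Section Equivalences.
Variables (A B : Category) (F : Functor A B) (E : EquivData F).
Local Notation G := (eqv_inv E).

Definition counit (b : B) : hom (F (G b)) b := ntc (eqv_counit E) b.
Definition counitV (b : B) : hom b (F (G b)) := inv (eqv_counit_iso E b).

Lemma iso_counit b : is_iso (counit b). Proof. exact: eqv_counit_iso. Qed.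
Lemma iso_counitV b : is_iso (counitV b). Proof. exact: iso_inv. Qed.
Lemma counitKV b : cmp (counit b) (counitV b) = idm b. Proof. exact: cmpfV. Qed.
Lemma counitVK b : cmp (counitV b) (counit b) = idm _. Proof. exact: cmpVf. Qed.

Lemma counit_natural (a b : B) (g : hom a b) :
  cmp (counit b) (fmap F (fmap G g)) = cmp g (counit a).
Proof. by have := ntc_natural (eqv_counit E) g; rewrite /= => ->. Qed.

Lemma counit_naturalA (a b : B) (g : hom a b) (d : A) (f : hom d (G a)) :
  cmp (counit b) (cmp (fmap F (fmap G g)) (fmap F f)) = cmp g (cmp (counit a) (fmap F f)).
Proof. by rewrite !cmp_assoc counit_natural. Qed.

Lemma counitV_natural (a b : B) (g : hom a b) :
  cmp (counitV b) g = cmp (fmap F (fmap G g)) (counitV a).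
Proof.
rewrite -[cmp (counitV b) g]cmp_id_r -(counitKV a) cmp_assoc -(cmp_assoc (counitV b)).
by rewrite -counit_natural !cmp_assoc counitVK cmp_id_l.
Qed.

Lemma fmap_inv_fmap (x y : B) (g : hom x y) :
  fmap F (fmap G g) = cmp (counitV y) (cmp g (counit x)).
Proof. by rewrite -counit_natural cmp_assoc counitVK cmp_id_l. Qed.

Lemma eqv_faithful (x y : A) (f f' : hom x y) : fmap F f = fmap F f' -> f = f'.
Proof.
move=> Ef; have K g : g = cmp (inv (eqv_unit_iso E y)) (cmp (fmap G (fmap F g)) (ntc (eqv_unit E) x)).
  by have := ntc_natural (eqv_unit E) g; rewrite /= => ->; rewrite cmp_assoc cmpVf cmp_id_l.
by rewrite (K f) (K f') Ef.
Qed.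

Lemma eqv_inv_faithful (a b : B) (g g' : hom a b) : fmap G g = fmap G g' -> g = g'.
Proof.
move=> Eg; have K h : h = cmp (cmp (counit b) (fmap F (fmap G h))) (counitV a).
  by rewrite counit_natural -cmp_assoc counitKV cmp_id_r.
by rewrite (K g) (K g') Eg.
Qed.

Lemma eqv_full :
  {lift : forall x y : A, hom (F x) (F y) -> hom x y | forall x y g, fmap F (lift x y g) = g}.
Proof.
exists (fun x y g => cmp (inv (eqv_unit_iso E y)) (cmp (fmap G g) (ntc (eqv_unit E) x))) => x y g.
apply: eqv_inv_faithful; set l := cmp (inv _) _.
have : cmp (fmap G (fmap F l)) (ntc (eqv_unit E) x) = cmp (fmap G g) (ntc (eqv_unit E) x).
  by have := ntc_natural (eqv_unit E) l; rewrite /= => ->; rewrite !cmp_assoc cmpfV cmp_id_l.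
move/(f_equal (fun h => cmp h (inv (eqv_unit_iso E x)))).
by rewrite -!cmp_assoc !cmpfV !cmp_id_r.
Qed.

Definition eqv_lift (x y : A) (g : hom (F x) (F y)) : hom x y := sval eqv_full x y g.

Lemma eqv_liftK (x y : A) (g : hom (F x) (F y)) : fmap F (eqv_lift g) = g.
Proof. exact: (svalP eqv_full). Qed.

Lemma iso_eqv_lift (x y : A) (g : hom (F x) (F y)) : is_iso g -> is_iso (eqv_lift g).
Proof.
case=> g' [h1 h2]; exists (eqv_lift g'); split; apply: eqv_faithful;
  by rewrite fmap_cmp !eqv_liftK ?h1 ?h2 fmap_id.
Qed.

Lemma heq_eqv_faithful (x y x' y' : A) (f : hom x y) (f' : hom x' y') :
  x = x' -> y = y' -> heq (fmap F f) (fmap F f') -> heq f f'.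
Proof. by move=> ex ey; destruct ex, ey => /heq_eq /eqv_faithful ->; apply: heq_refl. Qed.
End Equivalences.

Section EquivalenceToProduct.
Variables (A B1 B2 : Category) (F : Functor A (ProdCat B1 B2)) (E : EquivData F).
Implicit Type x : ProdCat B1 B2.

Lemma counit_fstKV x : cmp (counit E x).1 (counitV E x).1 = idm x.1.
Proof. exact: (f_equal fst (counitKV E x)). Qed.

Lemma counit_sndKV x : cmp (counit E x).2 (counitV E x).2 = idm x.2.
Proof. exact: (f_equal snd (counitKV E x)). Qed.

Lemma counit_fstKVA x (d : B1) (f : hom d x.1) : cmp (counit E x).1 (cmp (counitV E x).1 f) = f.
Proof. by rewrite cmp_assoc counit_fstKV cmp_id_l. Qed.

Lemma counit_sndKVA x (d : B2) (f : hom d x.2) : cmp (counit E x).2 (cmp (counitV E x).2 f) = f.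
Proof. by rewrite cmp_assoc counit_sndKV cmp_id_l. Qed.

Lemma fmap_counit_fstKV (D : Category) (G : Functor B1 D) x :
  cmp (fmap G (counit E x).1) (fmap G (counitV E x).1) = idm _.
Proof. by rewrite -fmap_cmp counit_fstKV fmap_id. Qed.

Lemma fmap_counit_sndKV (D : Category) (G : Functor B2 D) x :
  cmp (fmap G (counit E x).2) (fmap G (counitV E x).2) = idm _.
Proof. by rewrite -fmap_cmp counit_sndKV fmap_id. Qed.

Lemma fmap_counit_fstKVA (D : Category) (G : Functor B1 D) x (d : D) (f : hom d (G x.1)) :
  cmp (fmap G (counit E x).1) (cmp (fmap G (counitV E x).1) f) = f.
Proof. by rewrite cmp_assoc fmap_counit_fstKV cmp_id_l. Qed.

Lemma fmap_counit_sndKVA (D : Category) (G : Functor B2 D) x (d : D) (f : hom d (G x.2)) :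
  cmp (fmap G (counit E x).2) (cmp (fmap G (counitV E x).2) f) = f.
Proof. by rewrite cmp_assoc fmap_counit_sndKV cmp_id_l. Qed.
End EquivalenceToProduct.

Definition dterm (n : nat) : DHom n 1.
Proof. by exists [ffun _ => ord0]; apply/monobP => i j _; rewrite !ffunE. Defined.

Lemma dterm_comp (m n : nat) (f : DHom m n) : dcomp (dterm n) f = dterm m.
Proof. by apply: dhom_eq => i; rewrite /= !ffunE. Qed.

Lemma did1 : did 1 = dterm 1.
Proof. by apply: dhom_eq => i; rewrite /= !ffunE; apply: val_inj; case: i => [[|k] Hk]. Qed.

Lemma dcast_id (n : nat) (e : n = n) : dcast e = did n.
Proof. by apply: dhom_eq => i; apply: val_inj; rewrite /= !ffunE. Qed.

Lemma split_lshift (m n : nat) (j : 'I_m) : split (lshift n j) = inl j.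
Proof. exact: (unsplitK (inl j)). Qed.

Lemma split_rshift (m n : nat) (k : 'I_n) : split (rshift m k) = inr k.
Proof. exact: (unsplitK (inr k)). Qed.

Ltac case_innermost_split :=
  match goal with |- context [@split ?m ?n ?x] =>
    lazymatch x with context [split _] => fail | _ => idtac end;
    case: (@splitP m n x) => /= [[? ?] /= ?|[? ?] /= ?] end.

(* Decides an equation between composites of ordinal sums of concrete maps of
   Delta, by splitting every ordinal sum and comparing values pointwise. *)
Ltac delta_eq :=
  apply: dhom_eq => -[i Hi]; apply: val_inj; rewrite /= ?ffunE /dplus_fun /=;
  repeat (rewrite /= ?ffunE ?split_lshift ?split_rshift /=; try unfold dplus_fun;
          case_innermost_split);
  rewrite /= ?ffunE ?split_lshift ?split_rshift /=; try unfold dplus_fun; rewrite /= ?ffunE;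
  try unfold ord0; simpl; lia.

Definition dmu_l : DHom 3 2 := dplus (dterm 2) (did 1).
Definition dmu_r : DHom 3 2 := dplus (did 1) (dterm 2).

Lemma dmu_assoc : dcomp (dterm 2) dmu_l = dcomp (dterm 2) dmu_r.
Proof. by rewrite !dterm_comp. Qed.

Definition dmu4_l : DHom 4 3 := dplus dmu_l (did 1).
Definition dmu4_m : DHom 4 3 := dplus dmu_r (did 1).
Definition dmu4_r : DHom 4 3 := dplus (did 2) (dterm 2).

Lemma dmu4_lE : dmu4_l = dplus (dterm 2) (did 2). Proof. by rewrite /dmu4_l /dmu_l; delta_eq. Qed.
Lemma dmu4_mE : dmu4_m = dplus (did 1) dmu_l. Proof. by rewrite /dmu4_m /dmu_r /dmu_l; delta_eq. Qed.
Lemma dmu4_rE : dmu4_r = dplus (did 1) dmu_r. Proof. by rewrite /dmu4_r /dmu_r; delta_eq. Qed.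

Lemma dmu_l_dmu4_lm : dcomp dmu_l dmu4_l = dcomp dmu_l dmu4_m.
Proof. by rewrite /dmu4_l /dmu4_m /dmu_l /dmu_r; delta_eq. Qed.
Lemma dmu_rl_dmu4_lr : dcomp dmu_r dmu4_l = dcomp dmu_l dmu4_r.
Proof. by rewrite /dmu4_l /dmu4_r /dmu_l /dmu_r; delta_eq. Qed.
Lemma dmu_r_dmu4_rm : dcomp dmu_r dmu4_r = dcomp dmu_r dmu4_m.
Proof. by rewrite /dmu4_r /dmu4_m /dmu_l /dmu_r; delta_eq. Qed.

Definition dunit : DHom 0 1 := dterm 0.
Definition dunit_l : DHom 1 2 := dplus dunit (did 1).
Definition dunit_r : DHom 1 2 := dplus (did 1) dunit.

Lemma dterm_dunit_l : dcomp (dterm 2) dunit_l = did 1. Proof. by rewrite dterm_comp did1. Qed.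
Lemma dterm_dunit_r : dcomp (dterm 2) dunit_r = did 1. Proof. by rewrite dterm_comp did1. Qed.

Definition dunit_mid : DHom 2 3 := dplus dunit_r (did 1).

Lemma dunit_midE : dunit_mid = dplus (did 1) dunit_l.
Proof. by rewrite /dunit_mid /dunit_l /dunit_r /dunit; delta_eq. Qed.
Lemma dmu_l_dunit_mid : dcomp dmu_l dunit_mid = did 2.
Proof. by rewrite /dunit_mid /dunit_r /dunit /dmu_l; delta_eq. Qed.
Lemma dmu_r_dunit_mid : dcomp dmu_r dunit_mid = did 2.
Proof. by rewrite /dunit_mid /dunit_r /dunit /dmu_r; delta_eq. Qed.

Section HomotopyMonoidAxioms.
Variable H : HomotopyMonoid.
Local Notation C := (HC H).
Local Notation Cmap := (HCmap H).
Local Notation xi := (xi H).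

Lemma Cid_ob n (x : C n) : Cmap (did n) x = x.
Proof. exact: (Feq_ob (HCmap_id H n) x). Qed.

Lemma Cid_hom n (x y : C n) (f : hom x y) : heq (fmap (Cmap (did n)) f) f.
Proof. exact: (Feq_heq (HCmap_id H n) f). Qed.

Lemma Ccomp_ob m n p (g : DHom n p) (f : DHom m n) (x : C m) :
  Cmap (dcomp g f) x = Cmap g (Cmap f x).
Proof. exact: (Feq_ob (HCmap_comp H g f) x). Qed.

Lemma Ccomp_hom m n p (g : DHom n p) (f : DHom m n) (x y : C m) (h : hom x y) :
  heq (fmap (Cmap (dcomp g f)) h) (fmap (Cmap g) (fmap (Cmap f) h)).
Proof. exact: (Feq_heq (HCmap_comp H g f) h). Qed.

Lemma xi_natural_ob m m' n n' (f : DHom m m') (g : DHom n n') (x : C (m + n)) :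
  ((Cmap f (xi m n x).1, Cmap g (xi m n x).2) : ProdCat (C m') (C n')) =
  xi m' n' (Cmap (dplus f g) x).
Proof. exact: (Feq_ob (xi_natural H f g) x). Qed.

Lemma xi_natural_hom m m' n n' (f : DHom m m') (g : DHom n n') (x y : C (m + n)) (h : hom x y) :
  heq (phom (fmap (Cmap f) (fmap (xi m n) h).1) (fmap (Cmap g) (fmap (xi m n) h).2))
      (fmap (xi m' n') (fmap (Cmap (dplus f g)) h)).
Proof. exact: (Feq_heq (xi_natural H f g) h). Qed.

Lemma xi_coassoc_ob m n p (x : C (m + n + p)) :
  ((xi m n (xi (m + n) p x).1, (xi (m + n) p x).2) : ProdCat (ProdCat (C m) (C n)) (C p)) =
  (((xi m (n + p) (Cmap (dassoc m n p) x)).1,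
     (xi n p (xi m (n + p) (Cmap (dassoc m n p) x)).2).1),
    (xi n p (xi m (n + p) (Cmap (dassoc m n p) x)).2).2).
Proof. exact: (Feq_ob (xi_coassoc H m n p) x). Qed.

Lemma xi_coassoc_hom m n p (x y : C (m + n + p)) (h : hom x y) :
  heq (phom (fmap (xi m n) (fmap (xi (m + n) p) h).1) (fmap (xi (m + n) p) h).2)
      (phom (phom (fmap (xi m (n + p)) (fmap (Cmap (dassoc m n p)) h)).1
                  (fmap (xi n p) (fmap (xi m (n + p)) (fmap (Cmap (dassoc m n p)) h)).2).1)
            (fmap (xi n p) (fmap (xi m (n + p)) (fmap (Cmap (dassoc m n p)) h)).2).2).
Proof. exact: (Feq_heq (xi_coassoc H m n p) h). Qed.

Lemma xi_counit_l_ob n (x : C n) : (xi 0 n x).2 = Cmap (dlunit n) x.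
Proof. exact: (f_equal snd (Feq_ob (xi_counit_l H n) x)). Qed.

Lemma xi_counit_l_hom n (x y : C n) (h : hom x y) :
  heq (fmap (xi 0 n) h).2 (fmap (Cmap (dlunit n)) h).
Proof. exact: (heq_snd (Feq_heq (xi_counit_l H n) h)). Qed.

Lemma xi_counit_r_ob n (x : C (n + 0)) : (xi n 0 x).1 = Cmap (drunit n) x.
Proof. exact: (f_equal fst (Feq_ob (xi_counit_r H n) x)). Qed.

Lemma xi_counit_r_hom n (x y : C (n + 0)) (h : hom x y) :
  heq (fmap (xi n 0) h).1 (fmap (Cmap (drunit n)) h).
Proof. exact: (heq_fst (Feq_heq (xi_counit_r H n) h)). Qed.
End HomotopyMonoidAxioms.

Definition xi11 (H : HomotopyMonoid) : Functor (HC H 2) (ProdCat (HC H 1) (HC H 1)) := xi H 1 1.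
Definition xi21 (H : HomotopyMonoid) : Functor (HC H 3) (ProdCat (HC H 2) (HC H 1)) := xi H 2 1.
Definition xi12 (H : HomotopyMonoid) : Functor (HC H 3) (ProdCat (HC H 1) (HC H 2)) := xi H 1 2.

Section Associator.
Variable H : HomotopyMonoid.
Local Notation C := (HC H).
Local Notation Cmap := (HCmap H).
Local Notation K := (HC H 1).
Local Notation KK := (ProdCat K K).
Local Notation xi11 := (xi11 H).
Local Notation xi21 := (xi21 H).
Local Notation xi12 := (xi12 H).
Local Notation mu := (Cmap (dterm 2)).
Variables (E11 : EquivData xi11) (E21 : EquivData xi21).
Local Notation s := (eqv_inv E11).
Local Notation lift := (eqv_lift E11).
Local Notation cn := (counit E11).
Local Notation cnV := (counitV E11).

Definition otimes (a b : K) : K := mu (s ((a, b) : KK)).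

Definition to_Cid (x : K) : hom x (Cmap (did 1) x) := hom_of_eq (esym (Cid_ob x)).

Lemma to_Cid_natural (x y : K) (h : hom x y) :
  cmp (to_Cid y) h = cmp (fmap (Cmap (did 1)) h) (to_Cid x).
Proof. by symmetry; apply: heq_castVE (Cid_hom h). Qed.

Lemma xi_coassoc111 (t : C 3) :
  (xi11 (xi21 t).1).1 = (xi12 t).1 /\ (((xi11 (xi21 t).1).2, (xi21 t).2) : KK) = xi11 (xi12 t).2.
Proof.
move: (@xi_coassoc_ob H 1 1 1 t); rewrite /dassoc dcast_id Cid_ob => -[e1 e2].
by split; [rewrite e1 | rewrite e1 e2 /=; case: (xi11 _)].
Qed.

Lemma coassoc111_fst (t : C 3) : (xi11 (xi21 t).1).1 = (xi12 t).1.
Proof. exact: proj1 (xi_coassoc111 t). Qed.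

Lemma coassoc111_snd (t : C 3) : (((xi11 (xi21 t).1).2, (xi21 t).2) : KK) = xi11 (xi12 t).2.
Proof. exact: proj2 (xi_coassoc111 t). Qed.

Lemma coassoc111_fst_square (t t' : C 3) (phi : hom t t') :
  cmp (fmap xi12 phi).1 (hom_of_eq (coassoc111_fst t)) =
  cmp (hom_of_eq (coassoc111_fst t')) (fmap xi11 (fmap xi21 phi).1).1.
Proof.
apply: heq_castVE; apply: heq_sym.
have := heq_fst (heq_fst (@xi_coassoc_hom H 1 1 1 t t' phi)); rewrite /= /dassoc dcast_id => X.
exact: heq_trans X (heq_fst (heq_fmap _ (Cid_hom phi))).
Qed.

Lemma coassoc111_snd_square (t t' : C 3) (phi : hom t t') :
  cmp (fmap xi11 (fmap xi12 phi).2) (hom_of_eq (coassoc111_snd t)) =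
  cmp (hom_of_eq (coassoc111_snd t')) (phom (fmap xi11 (fmap xi21 phi).1).2 (fmap xi21 phi).2).
Proof.
apply: heq_castVE; apply: heq_sym.
have X := @xi_coassoc_hom H 1 1 1 t t' phi; rewrite /dassoc dcast_id in X.
apply: heq_pair.
  apply: heq_trans (heq_snd (heq_fst X)) _ => /=.
  exact: (heq_fst (heq_fmap _ (heq_snd (heq_fmap _ (Cid_hom phi))))).
apply: heq_trans (heq_snd X) _ => /=.
exact: (heq_snd (heq_fmap _ (heq_snd (heq_fmap _ (Cid_hom phi))))).
Qed.

Lemma xi11_mu_l (t : C 3) :
  ((mu (xi21 t).1, Cmap (did 1) (xi21 t).2) : KK) = xi11 (Cmap dmu_l t).
Proof. exact: (@xi_natural_ob H 2 1 1 1 (dterm 2) (did 1) t). Qed.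

Lemma xi11_mu_r (t : C 3) :
  ((Cmap (did 1) (xi12 t).1, mu (xi12 t).2) : KK) = xi11 (Cmap dmu_r t).
Proof. exact: (@xi_natural_ob H 1 1 2 1 (did 1) (dterm 2) t). Qed.

Lemma xi11_mu_l_square (t t' : C 3) (phi : hom t t') :
  cmp (fmap xi11 (fmap (Cmap dmu_l) phi)) (hom_of_eq (xi11_mu_l t)) =
  cmp (hom_of_eq (xi11_mu_l t'))
      (phom (fmap mu (fmap xi21 phi).1) (fmap (Cmap (did 1)) (fmap xi21 phi).2)).
Proof. by symmetry; apply: heq_castE (@xi_natural_hom H 2 1 1 1 (dterm 2) (did 1) _ _ phi). Qed.

Lemma xi11_mu_r_square (t t' : C 3) (phi : hom t t') :
  cmp (fmap xi11 (fmap (Cmap dmu_r) phi)) (hom_of_eq (xi11_mu_r t)) =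
  cmp (hom_of_eq (xi11_mu_r t'))
      (phom (fmap (Cmap (did 1)) (fmap xi12 phi).1) (fmap mu (fmap xi12 phi).2)).
Proof. by symmetry; apply: heq_castE (@xi_natural_hom H 1 1 2 1 (did 1) (dterm 2) _ _ phi). Qed.

Lemma mu_assoc_ob (t : C 3) : mu (Cmap dmu_l t) = mu (Cmap dmu_r t).
Proof. by rewrite -!Ccomp_ob dmu_assoc. Qed.

Lemma mu_assoc_square (t t' : C 3) (phi : hom t t') :
  cmp (hom_of_eq (mu_assoc_ob t')) (fmap mu (fmap (Cmap dmu_l) phi)) =
  cmp (fmap mu (fmap (Cmap dmu_r) phi)) (hom_of_eq (mu_assoc_ob t)).
Proof.
apply: heq_castE; apply: heq_trans (heq_sym (Ccomp_hom (dterm 2) dmu_l phi)) _.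
by rewrite dmu_assoc; apply: Ccomp_hom.
Qed.

Section Cells.
Variables (a b c : K) (t : C 3) (p : hom (s ((a, b) : KK)) (xi21 t).1) (q : hom c (xi21 t).2).

Definition kappa_l : hom (s ((otimes a b, c) : KK)) (Cmap dmu_l t) :=
  lift (cmp (hom_of_eq (xi11_mu_l t))
            (cmp (phom (fmap mu p) (cmp (fmap (Cmap (did 1)) q) (to_Cid c)))
                 (cn ((otimes a b, c) : KK)))).

Definition kappa_fst : hom a (xi12 t).1 :=
  cmp (hom_of_eq (coassoc111_fst t)) (cmp (fmap xi11 p).1 (cnV ((a, b) : KK)).1).

Definition kappa_snd : hom (s ((b, c) : KK)) (xi12 t).2 :=
  lift (cmp (hom_of_eq (coassoc111_snd t))
            (cmp (phom (cmp (fmap xi11 p).2 (cnV ((a, b) : KK)).2) q) (cn ((b, c) : KK)))).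

Definition kappa_r : hom (s ((a, otimes b c) : KK)) (Cmap dmu_r t) :=
  lift (cmp (hom_of_eq (xi11_mu_r t))
            (cmp (phom (cmp (fmap (Cmap (did 1)) kappa_fst) (to_Cid a)) (fmap mu kappa_snd))
                 (cn ((a, otimes b c) : KK)))).

Hypotheses (Hp : is_iso p) (Hq : is_iso q).

Lemma iso_kappa_l : is_iso kappa_l.
Proof.
apply/iso_eqv_lift/iso_cmp; last exact: iso_hom_of_eq.
apply: iso_cmp; first exact: iso_counit.
apply: iso_phom; first exact: iso_fmap.
by apply: iso_cmp; [apply: iso_hom_of_eq | apply: iso_fmap].
Qed.

Lemma iso_kappa_fst : is_iso kappa_fst.
Proof.
apply: iso_cmp; last exact: iso_hom_of_eq.
apply: iso_cmp; first exact: (iso_fst (iso_counitV _ _)).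
exact: (iso_fst (iso_fmap _ Hp)).
Qed.

Lemma iso_kappa_snd : is_iso kappa_snd.
Proof.
apply/iso_eqv_lift/iso_cmp; last exact: iso_hom_of_eq.
apply: iso_cmp; first exact: iso_counit.
apply: iso_phom => //; apply: iso_cmp; first exact: (iso_snd (iso_counitV _ _)).
exact: (iso_snd (iso_fmap _ Hp)).
Qed.

Lemma iso_kappa_r : is_iso kappa_r.
Proof.
apply/iso_eqv_lift/iso_cmp; last exact: iso_hom_of_eq.
apply: iso_cmp; first exact: iso_counit.
apply: iso_phom; last by apply/iso_fmap/iso_kappa_snd.
by apply: iso_cmp; [apply: iso_hom_of_eq | apply/iso_fmap/iso_kappa_fst].
Qed.

(* [kappa_l] and [kappa_r] present both bracketings through the two faces
   [dmu_l] and [dmu_r] of [t], whose images under [mu] agree. *)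
Definition assoc_via : hom (otimes (otimes a b) c) (otimes a (otimes b c)) :=
  cmp (fmap mu (inv iso_kappa_r)) (cmp (hom_of_eq (mu_assoc_ob t)) (fmap mu kappa_l)).
End Cells.

Section CellsNatural.
Variables (a b c a' b' c' : K) (t t' : C 3).
Variables (p : hom (s ((a, b) : KK)) (xi21 t).1) (q : hom c (xi21 t).2).
Variables (p' : hom (s ((a', b') : KK)) (xi21 t').1) (q' : hom c' (xi21 t').2).
Variables (f : hom a a') (g : hom b b') (h : hom c c') (phi : hom t t').
Hypothesis phi_fst : cmp (fmap xi21 phi).1 p = cmp p' (fmap s (phom f g : @hom KK (a, b) (a', b'))).
Hypothesis phi_snd : cmp (fmap xi21 phi).2 q = cmp q' h.

Lemma kappa_l_natural :
  cmp (kappa_l p' q')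
      (fmap s (phom (fmap mu (fmap s (phom f g : @hom KK (a, b) (a', b')))) h
               : @hom KK (otimes a b, c) (otimes a' b', c')))
  = cmp (fmap (Cmap dmu_l) phi) (kappa_l p q).
Proof.
apply: (eqv_faithful E11); rewrite !fmap_cmp /kappa_l !eqv_liftK.
rewrite -!cmp_assoc counit_natural !cmp_assoc; congr (cmp _ _).
rewrite xi11_mu_l_square -!cmp_assoc; congr (cmp _ _).
rewrite !phom_cmp; congr phom; first by rewrite -!fmap_cmp phi_fst.
by rewrite -cmp_assoc to_Cid_natural !cmp_assoc -!fmap_cmp phi_snd.
Qed.

Lemma kappa_fst_natural : cmp (fmap xi12 phi).1 (kappa_fst p) = cmp (kappa_fst p') f.
Proof.
rewrite /kappa_fst !cmp_assoc coassoc111_fst_square -!cmp_assoc; congr (cmp _ _).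
rewrite !cmp_assoc; have := f_equal (fun k => (fmap xi11 k).1) phi_fst.
rewrite /= !fmap_cmp /= => ->; rewrite -!cmp_assoc; congr (cmp _ _).
by have := f_equal fst (counitV_natural E11 (phom f g : @hom KK (a, b) (a', b'))); rewrite /= => <-.
Qed.

Lemma kappa_snd_natural :
  cmp (fmap xi12 phi).2 (kappa_snd p q) =
  cmp (kappa_snd p' q') (fmap s (phom g h : @hom KK (b, c) (b', c'))).
Proof.
apply: (eqv_faithful E11); rewrite !fmap_cmp /kappa_snd !eqv_liftK.
rewrite -!cmp_assoc counit_natural !cmp_assoc coassoc111_snd_square -!cmp_assoc; congr (cmp _ _).
rewrite !cmp_assoc; congr (cmp _ _); rewrite !phom_cmp; congr phom; last by rewrite phi_snd.
rewrite !cmp_assoc; have := f_equal (fun k => (fmap xi11 k).2) phi_fst.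
rewrite /= !fmap_cmp /= => ->; rewrite -!cmp_assoc; congr (cmp _ _).
by have := f_equal snd (counitV_natural E11 (phom f g : @hom KK (a, b) (a', b'))); rewrite /= => <-.
Qed.

Lemma kappa_r_natural :
  cmp (kappa_r p' q')
      (fmap s (phom f (fmap mu (fmap s (phom g h : @hom KK (b, c) (b', c'))))
               : @hom KK (a, otimes b c) (a', otimes b' c')))
  = cmp (fmap (Cmap dmu_r) phi) (kappa_r p q).
Proof.
apply: (eqv_faithful E11); rewrite !fmap_cmp /kappa_r !eqv_liftK.
rewrite -!cmp_assoc counit_natural !cmp_assoc; congr (cmp _ _).
rewrite xi11_mu_r_square -!cmp_assoc; congr (cmp _ _).
rewrite !phom_cmp; congr phom; last by rewrite -!fmap_cmp kappa_snd_natural.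
by rewrite -cmp_assoc to_Cid_natural !cmp_assoc -!fmap_cmp kappa_fst_natural.
Qed.

Hypotheses (Hp : is_iso p) (Hq : is_iso q) (Hp' : is_iso p') (Hq' : is_iso q').

Lemma assoc_via_natural :
  cmp (assoc_via Hp' Hq')
      (fmap mu (fmap s (phom (fmap mu (fmap s (phom f g : @hom KK (a, b) (a', b')))) h
                        : @hom KK (otimes a b, c) (otimes a' b', c'))))
  = cmp (fmap mu (fmap s (phom f (fmap mu (fmap s (phom g h : @hom KK (b, c) (b', c'))))
                          : @hom KK (a, otimes b c) (a', otimes b' c'))))
        (assoc_via Hp Hq).
Proof.
rewrite /assoc_via -!cmp_assoc -fmap_cmp kappa_l_natural fmap_cmp !cmp_assoc; congr (cmp _ _).
rewrite -!cmp_assoc mu_assoc_square !cmp_assoc; congr (cmp _ _).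
rewrite -!fmap_cmp; congr (fmap _ _).
by symmetry; apply: iso_square; apply: kappa_r_natural.
Qed.
End CellsNatural.

(* As [xi21] is full, the comparison of the two decorations lifts to some
   [phi : t -> t'], and naturality in [phi] gives the independence. *)
Lemma assoc_via_indep (a b c : K) (t t' : C 3)
    (p : hom (s ((a, b) : KK)) (xi21 t).1) (q : hom c (xi21 t).2)
    (p' : hom (s ((a, b) : KK)) (xi21 t').1) (q' : hom c (xi21 t').2)
    (Hp : is_iso p) (Hq : is_iso q) (Hp' : is_iso p') (Hq' : is_iso q') :
  assoc_via Hp Hq = assoc_via Hp' Hq'.
Proof.
pose phi := eqv_lift E21 ((cmp p' (inv Hp), cmp q' (inv Hq)) : hom (xi21 t) (xi21 t')).
have := @assoc_via_natural a b c a b c t t' p q p' q' (idm a) (idm b) (idm c) phi.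
rewrite /phi !eqv_liftK /= -!cmp_assoc !cmpVf !cmp_id_r.
repeat rewrite ?phom_idm ?fmap_id ?cmp_id_r.
by move=> /(_ erefl erefl Hp Hq Hp' Hq'); rewrite cmp_id_l cmp_id_r => ->.
Qed.
End Associator.

Ltac heq_auto_hook := fail.

(* Reduces a heterogeneous equality between composites to heterogeneous
   equalities between their factors, discarding casts and identities. *)
Ltac heq_auto := first [heq_auto_hook; heq_auto | heq_auto_step]
with heq_auto_step := lazymatch goal with
 | |- heq ?f ?f => apply: heq_refl
 | |- heq _ (cmp _ (assoc_via _ _)) => idtac
 | |- heq (cmp (hom_of_eq _) _) _ => apply: heq_trans (heq_cast_l _ _) _; heq_auto
 | |- heq _ (cmp (hom_of_eq _) _) => apply: heq_trans _ (heq_sym (heq_cast_l _ _)); heq_auto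
 | |- heq (cmp _ (hom_of_eq _)) _ => apply: heq_trans (heq_cast_r _ _) _; heq_auto
 | |- heq _ (cmp _ (hom_of_eq _)) => apply: heq_trans _ (heq_sym (heq_cast_r _ _)); heq_auto
 | |- heq (cmp (idm _) _) _ => apply: heq_trans (heq_cmp1f _) _; heq_auto
 | |- heq _ (cmp (idm _) _) => apply: heq_trans _ (heq_sym (heq_cmp1f _)); heq_auto
 | |- heq (cmp _ (idm _)) _ => apply: heq_trans (heq_cmpf1 _) _; heq_auto
 | |- heq _ (cmp _ (idm _)) => apply: heq_trans _ (heq_sym (heq_cmpf1 _)); heq_auto
 | |- heq (hom_of_eq _) (hom_of_eq _) =>
     apply: heq_trans (heq_hom_of_eq _) (heq_sym (heq_hom_of_eq _))
 | |- heq (hom_of_eq _) _ => apply: heq_trans (heq_hom_of_eq _) _; heq_auto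
 | |- heq _ (hom_of_eq _) => apply: heq_trans _ (heq_sym (heq_hom_of_eq _)); heq_auto
 | |- heq (fmap (HCmap _ (did _)) _) _ => apply: heq_trans (Cid_hom _) _; heq_auto
 | |- heq _ (fmap (HCmap _ (did _)) _) => apply: heq_trans _ (heq_sym (Cid_hom _)); heq_auto
 | |- heq (cmp _ _) (cmp _ _) => apply: heq_cmp; heq_auto
 | |- heq (cmp _ _) _ => apply: heq_trans _ (heq_cmpf1 _); apply: heq_cmp; heq_auto
 | |- heq _ (cmp _ _) => apply: heq_trans (heq_sym (heq_cmpf1 _)) _; apply: heq_cmp; heq_auto
 | |- heq (idm _) (idm _) => apply: heq_idm; try done
 | |- heq (fmap ?F _) (fmap ?F _) => apply: heq_fmap; heq_auto
 | |- heq (phom _ _) (phom _ _) => apply: heq_phom; heq_auto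
 | |- heq (_, _) (_, _) => apply: heq_pair; heq_auto
 | |- heq (fst _) (fst _) => first [apply: heq_fst; heq_auto | idtac]
 | |- heq (snd _) (snd _) => first [apply: heq_snd; heq_auto | idtac]
 | |- _ => first [apply: heq_refl | assumption | idtac]
 end.

(* Pushes functors inside composites and cancels counits against their inverses. *)
Ltac simpl_cmp := do 3 (rewrite ?fmap_cmp ?fmap_hom_of_eq ?eqv_liftK ?cmp_fst ?cmp_snd
  ?phom_fst ?phom_snd ?hom_of_eq_fst ?hom_of_eq_snd -?cmp_assoc ?counit_natural
  ?counit_naturalA ?phom_cmp ?phom_cmpA ?fmap_cmpfVA ?fmap_cmpfV ?counit_fstKVA
  ?counit_sndKVA ?counit_fstKV ?counit_sndKV ?fmap_counit_fstKVA ?fmap_counit_sndKVA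
  ?fmap_counit_fstKV ?fmap_counit_sndKV ?cmp_id_r ?cmp_id_l).

Definition xi31 (H : HomotopyMonoid) : Functor (HC H 4) (ProdCat (HC H 3) (HC H 1)) := xi H 3 1.
Definition xi22 (H : HomotopyMonoid) : Functor (HC H 4) (ProdCat (HC H 2) (HC H 2)) := xi H 2 2.
Definition xi13 (H : HomotopyMonoid) : Functor (HC H 4) (ProdCat (HC H 1) (HC H 3)) := xi H 1 3.

Section Pentagon.
Variable H : HomotopyMonoid.
Local Notation C := (HC H).
Local Notation Cmap := (HCmap H).
Local Notation K := (HC H 1).
Local Notation KK := (ProdCat K K).
Local Notation xi11 := (xi11 H).
Local Notation xi21 := (xi21 H).
Local Notation xi12 := (xi12 H).
Local Notation xi31 := (xi31 H).
Local Notation xi22 := (xi22 H).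
Local Notation xi13 := (xi13 H).
Local Notation mu := (Cmap (dterm 2)).

Section Faces.
Variable T : C 4.

Lemma xi21_mu4_l : xi21 (Cmap dmu4_l T) = ((Cmap dmu_l (xi31 T).1, Cmap (did 1) (xi31 T).2) : ProdCat (C 2) K).
Proof. exact: esym (@xi_natural_ob H 3 2 1 1 dmu_l (did 1) T). Qed.

Lemma xi21_mu4_m : xi21 (Cmap dmu4_m T) = ((Cmap dmu_r (xi31 T).1, Cmap (did 1) (xi31 T).2) : ProdCat (C 2) K).
Proof. exact: esym (@xi_natural_ob H 3 2 1 1 dmu_r (did 1) T). Qed.

Lemma xi21_mu4_r : xi21 (Cmap dmu4_r T) = ((Cmap (did 2) (xi22 T).1, mu (xi22 T).2) : ProdCat (C 2) K).
Proof. exact: esym (@xi_natural_ob H 2 2 2 1 (did 2) (dterm 2) T). Qed.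

Lemma xi12_mu4_l : xi12 (Cmap dmu4_l T) = ((mu (xi22 T).1, Cmap (did 2) (xi22 T).2) : ProdCat K (C 2)).
Proof. rewrite dmu4_lE; exact: esym (@xi_natural_ob H 2 1 2 2 (dterm 2) (did 2) T). Qed.

Lemma xi12_mu4_m : xi12 (Cmap dmu4_m T) = ((Cmap (did 1) (xi13 T).1, Cmap dmu_l (xi13 T).2) : ProdCat K (C 2)).
Proof. rewrite dmu4_mE; exact: esym (@xi_natural_ob H 1 1 3 2 (did 1) dmu_l T). Qed.

Lemma xi12_mu4_r : xi12 (Cmap dmu4_r T) = ((Cmap (did 1) (xi13 T).1, Cmap dmu_r (xi13 T).2) : ProdCat K (C 2)).
Proof. rewrite dmu4_rE; exact: esym (@xi_natural_ob H 1 1 3 2 (did 1) dmu_r T). Qed.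

Lemma xi_coassoc211 :
  xi21 (xi31 T).1 = (((xi22 T).1, (xi11 (xi22 T).2).1) : ProdCat (C 2) K) /\
  (xi31 T).2 = (xi11 (xi22 T).2).2.
Proof. by move: (@xi_coassoc_ob H 2 1 1 T); rewrite /dassoc dcast_id Cid_ob => -[]. Qed.

Lemma xi_coassoc121 :
  xi12 (xi31 T).1 = (((xi13 T).1, (xi21 (xi13 T).2).1) : ProdCat K (C 2)) /\
  (xi31 T).2 = (xi21 (xi13 T).2).2.
Proof. by move: (@xi_coassoc_ob H 1 2 1 T); rewrite /dassoc dcast_id Cid_ob => -[]. Qed.

Lemma xi_coassoc112 :
  xi11 (xi22 T).1 = (((xi13 T).1, (xi12 (xi13 T).2).1) : KK) /\
  (xi22 T).2 = (xi12 (xi13 T).2).2.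
Proof. by move: (@xi_coassoc_ob H 1 1 2 T); rewrite /dassoc dcast_id Cid_ob => -[]. Qed.

Lemma xi_coassoc211_snd : (((xi21 (xi31 T).1).2, (xi31 T).2) : KK) = xi11 (xi22 T).2.
Proof. by case: xi_coassoc211 => -> ->; case: (xi11 _). Qed.

Lemma mu_l_mu4_lm : Cmap dmu_l (Cmap dmu4_l T) = Cmap dmu_l (Cmap dmu4_m T).
Proof. by rewrite -!Ccomp_ob dmu_l_dmu4_lm. Qed.

Lemma mu_rl_mu4_lr : Cmap dmu_r (Cmap dmu4_l T) = Cmap dmu_l (Cmap dmu4_r T).
Proof. by rewrite -!Ccomp_ob dmu_rl_dmu4_lr. Qed.

Lemma mu_r_mu4_rm : Cmap dmu_r (Cmap dmu4_r T) = Cmap dmu_r (Cmap dmu4_m T).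
Proof. by rewrite -!Ccomp_ob dmu_r_dmu4_rm. Qed.
End Faces.

Variable E11 : EquivData xi11.
Local Notation s := (eqv_inv E11).
Local Notation otimes := (otimes E11).
Local Notation cn := (counit E11).

Section Cells.
Variables (w x y z : K) (T : C 4).
Variables (p0 : hom (s ((w, x) : KK)) (xi21 (xi31 T).1).1) (q0 : hom y (xi21 (xi31 T).1).2).
Variable r0 : hom z (xi31 T).2.
Hypotheses (Hp0 : is_iso p0) (Hq0 : is_iso q0) (Hr0 : is_iso r0).

Definition p_l : hom (s ((otimes w x, y) : KK)) (xi21 (Cmap dmu4_l T)).1 :=
  cmp (hom_of_eq (esym (f_equal fst (xi21_mu4_l T)))) (kappa_l p0 q0).
Definition q_l : hom z (xi21 (Cmap dmu4_l T)).2 :=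
  cmp (hom_of_eq (esym (f_equal snd (xi21_mu4_l T)))) (cmp (fmap (Cmap (did 1)) r0) (to_Cid z)).
Definition p_m : hom (s ((w, otimes x y) : KK)) (xi21 (Cmap dmu4_m T)).1 :=
  cmp (hom_of_eq (esym (f_equal fst (xi21_mu4_m T)))) (kappa_r p0 q0).
Definition q_m : hom z (xi21 (Cmap dmu4_m T)).2 :=
  cmp (hom_of_eq (esym (f_equal snd (xi21_mu4_m T)))) (cmp (fmap (Cmap (did 1)) r0) (to_Cid z)).
Definition p22 : hom (s ((w, x) : KK)) (xi22 T).1 :=
  cmp (hom_of_eq (f_equal fst (proj1 (xi_coassoc211 T)))) p0.
Definition q22 : hom (s ((y, z) : KK)) (xi22 T).2 :=
  eqv_lift E11 (cmp (hom_of_eq (xi_coassoc211_snd T)) (cmp (phom q0 r0) (cn ((y, z) : KK)))).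
Definition p_r : hom (s ((w, x) : KK)) (xi21 (Cmap dmu4_r T)).1 :=
  cmp (hom_of_eq (esym (f_equal fst (xi21_mu4_r T))))
      (cmp (fmap (Cmap (did 2)) p22) (hom_of_eq (esym (Cid_ob _)))).
Definition q_r : hom (otimes y z) (xi21 (Cmap dmu4_r T)).2 :=
  cmp (hom_of_eq (esym (f_equal snd (xi21_mu4_r T)))) (fmap mu q22).
Definition p_back : hom (s ((x, y) : KK)) (xi21 (xi13 T).2).1 :=
  cmp (hom_of_eq (f_equal snd (proj1 (xi_coassoc121 T)))) (kappa_snd p0 q0).
Definition q_back : hom z (xi21 (xi13 T).2).2 :=
  cmp (hom_of_eq (proj2 (xi_coassoc121 T))) r0.

Lemma iso_p_l : is_iso p_l.
Proof. by apply: iso_cmp; [apply: iso_kappa_l | apply: iso_hom_of_eq]. Qed.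
Lemma iso_q_l : is_iso q_l.
Proof. by apply: iso_cmp; [apply: iso_cmp; [apply: iso_hom_of_eq | apply: iso_fmap] | apply: iso_hom_of_eq]. Qed.
Lemma iso_p_m : is_iso p_m.
Proof. by apply: iso_cmp; [apply: iso_kappa_r | apply: iso_hom_of_eq]. Qed.
Lemma iso_q_m : is_iso q_m.
Proof. by apply: iso_cmp; [apply: iso_cmp; [apply: iso_hom_of_eq | apply: iso_fmap] | apply: iso_hom_of_eq]. Qed.
Lemma iso_p_r : is_iso p_r.
Proof.
apply: iso_cmp; [apply: iso_cmp; [exact: iso_hom_of_eq | apply: iso_fmap] | exact: iso_hom_of_eq].
by apply: iso_cmp; [exact: Hp0 | exact: iso_hom_of_eq].
Qed.
Lemma iso_q_r : is_iso q_r.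
Proof.
apply: iso_cmp; [apply: iso_fmap | exact: iso_hom_of_eq].
apply/iso_eqv_lift/iso_cmp; last exact: iso_hom_of_eq.
by apply: iso_cmp; [apply: iso_counit | apply: iso_phom].
Qed.
Lemma iso_p_back : is_iso p_back.
Proof. by apply: iso_cmp; [apply: iso_kappa_snd | apply: iso_hom_of_eq]. Qed.
Lemma iso_q_back : is_iso q_back.
Proof. by apply: iso_cmp; [apply: Hr0 | apply: iso_hom_of_eq]. Qed.

Lemma vertex_12_34 : heq (kappa_r p_l q_l) (kappa_l p_r q_r).
Proof.
apply: (heq_eqv_faithful E11) => //; first exact: mu_rl_mu4_lr.
rewrite /kappa_r /kappa_l /kappa_fst /kappa_snd /p_l /q_l /p_r /q_r /p22 /q22 /to_Cid; simpl_cmp.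
heq_auto.
apply: (heq_eqv_faithful E11) => //; first by rewrite xi12_mu4_l /= Cid_ob.
rewrite /to_Cid; simpl_cmp; heq_auto.
Qed.

Lemma vertex_123_4 :
  heq (kappa_l p_l q_l)
      (cmp (kappa_l p_m q_m)
           (fmap s (phom (assoc_via Hp0 Hq0) (idm z)
                    : @hom KK (otimes (otimes w x) y, z) (otimes w (otimes x y), z)))).
Proof.
apply: (heq_eqv_faithful E11) => //; first exact: mu_l_mu4_lm.
by rewrite /kappa_l /assoc_via /p_l /q_l /p_m /q_m /to_Cid; simpl_cmp; heq_auto.
Qed.

Lemma kappa_snd_mu4_r : heq (kappa_snd p_r q_r) (kappa_r p_back q_back).
Proof.
apply: (heq_eqv_faithful E11) => //; first by rewrite xi12_mu4_r.
rewrite /kappa_r /kappa_snd /kappa_fst /p_r /q_r /p_back /q_back /p22 /q22 /to_Cid; simpl_cmp.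
heq_auto.
apply: (heq_eqv_faithful E11) => //; first exact: (proj2 (xi_coassoc112 T)).
by simpl_cmp; heq_auto.
Qed.

Lemma kappa_snd_mu4_m : heq (kappa_snd p_m q_m) (kappa_l p_back q_back).
Proof.
apply: (heq_eqv_faithful E11) => //; first by rewrite xi12_mu4_m.
by rewrite /kappa_l /kappa_snd /kappa_fst /p_m /q_m /p_back /q_back /to_Cid; simpl_cmp; heq_auto.
Qed.

Lemma kappa_fst_mu4_mr : heq (kappa_fst p_m) (kappa_fst p_r).
Proof. by rewrite /kappa_fst /p_r /p_m /p22 /kappa_r /to_Cid; simpl_cmp; heq_auto. Qed.

Lemma vertex_1_234 :
  heq (kappa_r p_m q_m)
      (cmp (kappa_r p_r q_r)
           (fmap s (phom (idm w) (assoc_via iso_p_back iso_q_back)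
                    : @hom KK (w, otimes (otimes x y) z) (w, otimes x (otimes y z))))).
Proof.
have := kappa_fst_mu4_mr => fst_mr.
apply: (heq_eqv_faithful E11) => //; first exact: esym (mu_r_mu4_rm T).
rewrite {1 2}/kappa_r /to_Cid; simpl_cmp.
heq_auto.
apply: heq_trans (heq_fmap _ kappa_snd_mu4_m) _.
apply: heq_sym; rewrite /assoc_via (cmp_assoc (fmap mu (kappa_snd _ _))).
apply: heq_cmp_idm_l.
  apply: heq_trans (heq_fmap_cmpfV mu (iso_kappa_r iso_p_back iso_q_back) kappa_snd_mu4_r) _.
  exact: heq_idm (esym (mu_assoc_ob _)).
heq_auto.
Qed.

Lemma assoc_via_pentagon :
  cmp (assoc_via iso_p_r iso_q_r) (assoc_via iso_p_l iso_q_l) =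
  cmp (fmap mu (fmap s (phom (idm w) (assoc_via iso_p_back iso_q_back)
                        : @hom KK (w, otimes (otimes x y) z) (w, otimes x (otimes y z)))))
      (cmp (assoc_via iso_p_m iso_q_m)
           (fmap mu (fmap s (phom (assoc_via Hp0 Hq0) (idm z)
                             : @hom KK (otimes (otimes w x) y, z) (otimes w (otimes x y), z))))).
Proof.
apply: heq_eq.
pose e := etrans (mu_assoc_ob (Cmap dmu4_l T))
                 (etrans (f_equal mu (mu_rl_mu4_lr T)) (mu_assoc_ob (Cmap dmu4_r T))).
apply: (heq_trans (g := cmp (fmap mu (inv (iso_kappa_r iso_p_r iso_q_r)))
                            (cmp (hom_of_eq e) (fmap mu (kappa_l p_l q_l))))).
  rewrite /assoc_via -!cmp_assoc; apply: heq_cmp; last exact: heq_refl.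
  apply: heq_trans (heq_cast_l _ _) _; apply: heq_trans _ (heq_sym (heq_cast_l _ _)).
  rewrite (cmp_assoc (fmap mu (kappa_l p_r q_r))); apply: heq_cmp_idm_l.
    apply: heq_trans (heq_fmap_cmpfV mu (iso_kappa_r iso_p_l iso_q_l) (heq_sym vertex_12_34)) _.
    exact: heq_idm (esym (mu_assoc_ob _)).
  heq_auto.
apply: heq_sym; rewrite /assoc_via -!cmp_assoc (cmp_assoc (fmap mu (fmap s _))).
apply: heq_cmp.
  apply: heq_trans (heq_cast_l _ _) _; apply: heq_trans _ (heq_sym (heq_cast_l _ _)).
  by rewrite -fmap_cmp; apply/heq_fmap/heq_sym/vertex_123_4.
by rewrite -fmap_cmp; apply/heq_fmap/(heq_cmpV _ _ vertex_1_234).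
Qed.
End Cells.
End Pentagon.

Definition xi01 (H : HomotopyMonoid) : Functor (HC H 1) (ProdCat (HC H 0) (HC H 1)) := xi H 0 1.
Definition xi10 (H : HomotopyMonoid) : Functor (HC H 1) (ProdCat (HC H 1) (HC H 0)) := xi H 1 0.

Section Unit.
Variable H : HomotopyMonoid.
Local Notation C := (HC H).
Local Notation Cmap := (HCmap H).
Local Notation K := (HC H 1).
Local Notation KK := (ProdCat K K).
Local Notation xi11 := (xi11 H).
Local Notation xi01 := (xi01 H).
Local Notation xi10 := (xi10 H).
Local Notation mu := (Cmap (dterm 2)).
Variables (E11 : EquivData xi11) (E0 : EquivData (xi0 H)).
Local Notation s := (eqv_inv E11).
Local Notation otimes := (otimes E11).
Local Notation cn := (counit E11).

Definition unit0 : C 0 := eqv_inv E0 (tt : TermCat).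
Definition unit1 : K := Cmap dunit unit0.
Definition from_unit0 (u : C 0) : hom unit0 u := eqv_lift E0 (tt : @hom TermCat (xi0 H unit0) (xi0 H u)).

Lemma C0_hom_uniq (u v : C 0) (f g : hom u v) : f = g.
Proof. by apply: (eqv_faithful E0); case: (fmap _ f); case: (fmap _ g). Qed.

Lemma heq_C0 (u v u' v' : C 0) (f : hom u v) (g : hom u' v') : u = u' -> v = v' -> heq f g.
Proof. by move=> eu ev; destruct eu, ev; rewrite (C0_hom_uniq f g); apply: heq_refl. Qed.

Lemma iso_from_unit0 u : is_iso (from_unit0 u).
Proof. by exists (eqv_lift E0 (tt : @hom TermCat (xi0 H u) (xi0 H unit0))); split; apply: C0_hom_uniq. Qed.

Lemma xi11_unit_l (y : K) : xi11 (Cmap dunit_l y) = ((Cmap dunit (xi01 y).1, Cmap (did 1) (xi01 y).2) : KK).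
Proof. exact: esym (@xi_natural_ob H 0 1 1 1 dunit (did 1) y). Qed.

Lemma xi11_unit_r (x : K) : xi11 (Cmap dunit_r x) = ((Cmap (did 1) (xi10 x).1, Cmap dunit (xi10 x).2) : KK).
Proof. exact: esym (@xi_natural_ob H 1 1 0 1 (did 1) dunit x). Qed.

Lemma xi01_snd (y : K) : (xi01 y).2 = y.
Proof. by have := @xi_counit_l_ob H 1 y; rewrite /dlunit dcast_id Cid_ob. Qed.

Lemma xi10_fst (x : K) : (xi10 x).1 = x.
Proof. by have := @xi_counit_r_ob H 1 x; rewrite /drunit dcast_id Cid_ob. Qed.

Lemma mu_unit_l (y : K) : mu (Cmap dunit_l y) = y.
Proof. by rewrite -Ccomp_ob dterm_dunit_l Cid_ob. Qed.

Lemma mu_unit_r (x : K) : mu (Cmap dunit_r x) = x.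
Proof. by rewrite -Ccomp_ob dterm_dunit_r Cid_ob. Qed.

Lemma Cid_xi01_snd (y : K) : y = Cmap (did 1) (xi01 y).2.
Proof. by rewrite Cid_ob xi01_snd. Qed.

Lemma Cid_xi10_fst (x : K) : x = Cmap (did 1) (xi10 x).1.
Proof. by rewrite Cid_ob xi10_fst. Qed.

Lemma xi01_snd_hom (y y' : K) (g : hom y y') : heq (fmap xi01 g).2 g.
Proof.
have := @xi_counit_l_hom H 1 _ _ g; rewrite /dlunit dcast_id => X.
exact: heq_trans X (Cid_hom g).
Qed.

Lemma xi10_fst_hom (x x' : K) (g : hom x x') : heq (fmap xi10 g).1 g.
Proof.
have := @xi_counit_r_hom H 1 _ _ g; rewrite /drunit dcast_id => X.
exact: heq_trans X (Cid_hom g).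
Qed.

Lemma mu_unit_l_hom (y y' : K) (g : hom y y') : heq (fmap mu (fmap (Cmap dunit_l) g)) g.
Proof. by apply: heq_trans (heq_sym (Ccomp_hom _ _ g)) _; rewrite dterm_dunit_l; apply: Cid_hom. Qed.

Lemma mu_unit_r_hom (x x' : K) (g : hom x x') : heq (fmap mu (fmap (Cmap dunit_r) g)) g.
Proof. by apply: heq_trans (heq_sym (Ccomp_hom _ _ g)) _; rewrite dterm_dunit_r; apply: Cid_hom. Qed.

Lemma xi11_unit_l_square (y y' : K) (g : hom y y') :
  cmp (fmap xi11 (fmap (Cmap dunit_l) g)) (hom_of_eq (esym (xi11_unit_l y))) =
  cmp (hom_of_eq (esym (xi11_unit_l y')))
      (phom (fmap (Cmap dunit) (fmap xi01 g).1) (fmap (Cmap (did 1)) (fmap xi01 g).2)).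
Proof. by apply: heq_castVE; apply: heq_sym (@xi_natural_hom H 0 1 1 1 dunit (did 1) _ _ g). Qed.

Lemma xi11_unit_r_square (x x' : K) (g : hom x x') :
  cmp (fmap xi11 (fmap (Cmap dunit_r) g)) (hom_of_eq (esym (xi11_unit_r x))) =
  cmp (hom_of_eq (esym (xi11_unit_r x')))
      (phom (fmap (Cmap (did 1)) (fmap xi10 g).1) (fmap (Cmap dunit) (fmap xi10 g).2)).
Proof. by apply: heq_castVE; apply: heq_sym (@xi_natural_hom H 1 1 0 1 (did 1) dunit _ _ g). Qed.

Lemma xi11_unit_r_fst_hom (x x' : K) (g : hom x x') : heq (fmap xi11 (fmap (Cmap dunit_r) g)).1 g.
Proof.
apply: heq_trans (heq_fst (heq_sym (@xi_natural_hom H 1 1 0 1 (did 1) dunit _ _ g))) _ => /=.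
exact: heq_trans (Cid_hom _) (xi10_fst_hom g).
Qed.

Lemma xi11_unit_l_snd_hom (y y' : K) (g : hom y y') : heq (fmap xi11 (fmap (Cmap dunit_l) g)).2 g.
Proof.
apply: heq_trans (heq_snd (heq_sym (@xi_natural_hom H 0 1 1 1 dunit (did 1) _ _ g))) _ => /=.
exact: heq_trans (Cid_hom _) (xi01_snd_hom g).
Qed.

Ltac heq_auto_hook ::= lazymatch goal with
 | |- @heq (HC _ 0) _ _ _ _ _ _ => apply: heq_C0; try done
 | |- heq _ (fmap xi01 _).2 => apply: heq_trans _ (heq_sym (xi01_snd_hom _))
 | |- heq (fmap xi11 (fmap (Cmap dunit_r) _)).1 _ => apply: heq_trans (xi11_unit_r_fst_hom _) _
 | |- heq (fmap xi11 (fmap (Cmap dunit_l) _)).2 _ => apply: heq_trans (xi11_unit_l_snd_hom _) _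
 | |- heq (fmap mu (fmap (Cmap dunit_l) _)) _ => apply: heq_trans (mu_unit_l_hom _) _
 | |- heq (fmap mu (fmap (Cmap dunit_r) _)) _ => apply: heq_trans (mu_unit_r_hom _) _
 | |- heq _ (fmap mu (fmap (Cmap dunit_l) _)) => apply: heq_trans _ (heq_sym (mu_unit_l_hom _))
 | |- heq _ (fmap mu (fmap (Cmap dunit_r) _)) => apply: heq_trans _ (heq_sym (mu_unit_r_hom _))
 end.

Definition lam (y : K) : hom (s ((unit1, y) : KK)) (Cmap dunit_l y) :=
  eqv_lift E11 (cmp (hom_of_eq (esym (xi11_unit_l y)))
    (cmp (phom (fmap (Cmap dunit) (from_unit0 (xi01 y).1)) (hom_of_eq (Cid_xi01_snd y)))
         (cn ((unit1, y) : KK)))).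

Definition rho (x : K) : hom (s ((x, unit1) : KK)) (Cmap dunit_r x) :=
  eqv_lift E11 (cmp (hom_of_eq (esym (xi11_unit_r x)))
    (cmp (phom (hom_of_eq (Cid_xi10_fst x)) (fmap (Cmap dunit) (from_unit0 (xi10 x).2)))
         (cn ((x, unit1) : KK)))).

Definition lunitor (y : K) : hom (otimes unit1 y) y := cmp (hom_of_eq (mu_unit_l y)) (fmap mu (lam y)).
Definition runitor (x : K) : hom (otimes x unit1) x := cmp (hom_of_eq (mu_unit_r x)) (fmap mu (rho x)).

Lemma iso_lam y : is_iso (lam y).
Proof.
apply/iso_eqv_lift/iso_cmp; last exact: iso_hom_of_eq.
apply: iso_cmp; first exact: iso_counit.
by apply: iso_phom; [apply/iso_fmap/iso_from_unit0 | apply: iso_hom_of_eq].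
Qed.

Lemma iso_rho x : is_iso (rho x).
Proof.
apply/iso_eqv_lift/iso_cmp; last exact: iso_hom_of_eq.
apply: iso_cmp; first exact: iso_counit.
by apply: iso_phom; [apply: iso_hom_of_eq | apply/iso_fmap/iso_from_unit0].
Qed.

Lemma iso_lunitor y : is_iso (lunitor y).
Proof. by apply: iso_cmp; [apply/iso_fmap/iso_lam | apply: iso_hom_of_eq]. Qed.

Lemma iso_runitor x : is_iso (runitor x).
Proof. by apply: iso_cmp; [apply/iso_fmap/iso_rho | apply: iso_hom_of_eq]. Qed.

Lemma lam_natural (y y' : K) (f : hom y y') :
  cmp (lam y') (fmap s (phom (idm unit1) f : @hom KK (unit1, y) (unit1, y'))) =
  cmp (fmap (Cmap dunit_l) f) (lam y).
Proof.
apply: (eqv_faithful E11); rewrite !fmap_cmp /lam !eqv_liftK.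
rewrite -!cmp_assoc counit_natural !cmp_assoc; congr (cmp _ _).
rewrite xi11_unit_l_square -!cmp_assoc; congr (cmp _ _).
rewrite !phom_cmp; congr phom.
  by rewrite cmp_id_r -fmap_cmp; congr (fmap _ _); apply: C0_hom_uniq.
by apply: heq_eq; heq_auto; apply: heq_sym (xi01_snd_hom f).
Qed.

Lemma rho_natural (x x' : K) (f : hom x x') :
  cmp (rho x') (fmap s (phom f (idm unit1) : @hom KK (x, unit1) (x', unit1))) =
  cmp (fmap (Cmap dunit_r) f) (rho x).
Proof.
apply: (eqv_faithful E11); rewrite !fmap_cmp /rho !eqv_liftK.
rewrite -!cmp_assoc counit_natural !cmp_assoc; congr (cmp _ _).
rewrite xi11_unit_r_square -!cmp_assoc; congr (cmp _ _).
rewrite !phom_cmp; congr phom.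
  by apply: heq_eq; heq_auto; apply: heq_sym (xi10_fst_hom f).
by rewrite cmp_id_r -fmap_cmp; congr (fmap _ _); apply: C0_hom_uniq.
Qed.

Lemma lunitor_natural (y y' : K) (f : hom y y') :
  cmp (lunitor y') (fmap mu (fmap s (phom (idm unit1) f : @hom KK (unit1, y) (unit1, y')))) =
  cmp f (lunitor y).
Proof. by rewrite /lunitor -cmp_assoc -fmap_cmp lam_natural fmap_cmp; apply: heq_eq; heq_auto. Qed.

Lemma runitor_natural (x x' : K) (f : hom x x') :
  cmp (runitor x') (fmap mu (fmap s (phom f (idm unit1) : @hom KK (x, unit1) (x', unit1)))) =
  cmp f (runitor x).
Proof. by rewrite /runitor -cmp_assoc -fmap_cmp rho_natural fmap_cmp; apply: heq_eq; heq_auto. Qed.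

Section Triangle.
Variables (x y : K).
Let u : C 2 := s ((x, y) : KK).
Let t : C 3 := Cmap dunit_mid u.

Lemma xi21_unit_mid : xi21 H t = ((Cmap dunit_r (xi11 u).1, Cmap (did 1) (xi11 u).2) : ProdCat (C 2) K).
Proof. exact: esym (@xi_natural_ob H 1 2 1 1 dunit_r (did 1) u). Qed.

Lemma xi12_unit_mid : xi12 H t = ((Cmap (did 1) (xi11 u).1, Cmap dunit_l (xi11 u).2) : ProdCat K (C 2)).
Proof. by rewrite /t dunit_midE; apply: esym (@xi_natural_ob H 1 1 1 2 (did 1) dunit_l u). Qed.

Lemma mu_l_unit_mid : Cmap dmu_l t = u.
Proof. by rewrite /t -Ccomp_ob dmu_l_dunit_mid Cid_ob. Qed.

Lemma mu_r_unit_mid : Cmap dmu_r t = u.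
Proof. by rewrite /t -Ccomp_ob dmu_r_dunit_mid Cid_ob. Qed.

Definition p_tri : hom (s ((x, unit1) : KK)) (xi21 H t).1 :=
  cmp (hom_of_eq (esym (f_equal fst xi21_unit_mid)))
      (cmp (fmap (Cmap dunit_r) (counitV E11 ((x, y) : KK)).1) (rho x)).
Definition q_tri : hom y (xi21 H t).2 :=
  cmp (hom_of_eq (esym (f_equal snd xi21_unit_mid)))
      (cmp (fmap (Cmap (did 1)) (counitV E11 ((x, y) : KK)).2) (to_Cid y)).

Lemma iso_p_tri : is_iso p_tri.
Proof.
apply: iso_cmp; last exact: iso_hom_of_eq.
by apply: iso_cmp; [apply: iso_rho | apply/iso_fmap/(iso_fst (iso_counitV _ _))].
Qed.

Lemma iso_q_tri : is_iso q_tri.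
Proof.
apply: iso_cmp; last exact: iso_hom_of_eq.
by apply: iso_cmp; [apply: iso_hom_of_eq | apply/iso_fmap/(iso_snd (iso_counitV _ _))].
Qed.

Lemma kappa_l_unit_mid :
  heq (kappa_l p_tri q_tri) (fmap s (phom (runitor x) (idm y) : @hom KK (otimes x unit1, y) (x, y))).
Proof.
apply: (heq_eqv_faithful E11) => //; first exact: mu_l_unit_mid.
rewrite fmap_inv_fmap /kappa_l /p_tri /q_tri /runitor /to_Cid; simpl_cmp.
apply: heq_trans (heq_cast_l _ _) _; rewrite !cmp_assoc; apply: heq_cmp; first exact: heq_refl.
by apply: heq_pair; rewrite ?cmp_fst ?cmp_snd ?phom_fst ?phom_snd; simpl_cmp; heq_auto.
Qed.

Lemma kappa_snd_unit_mid :
  heq (kappa_snd p_tri q_tri) (cmp (fmap (Cmap dunit_l) (counitV E11 ((x, y) : KK)).2) (lam y)).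
Proof.
apply: (heq_eqv_faithful E11) => //; first by rewrite xi12_unit_mid.
rewrite /kappa_snd /p_tri /q_tri /lam /rho /to_Cid !eqv_liftK !fmap_cmp !eqv_liftK.
rewrite (cmp_assoc (fmap xi11 (fmap (Cmap dunit_r) _))) xi11_unit_r_square.
rewrite (cmp_assoc (fmap xi11 (fmap (Cmap dunit_l) _))) xi11_unit_l_square.
simpl_cmp; rewrite -!(@fmap_cmp _ _ (Cmap dunit)); heq_auto.
by move: (@xi_coassoc_ob H 1 0 1 u); rewrite /dassoc dcast_id Cid_ob => -[->].
Qed.

Lemma kappa_r_unit_mid :
  heq (kappa_r p_tri q_tri) (fmap s (phom (idm x) (lunitor y) : @hom KK (x, otimes unit1 y) (x, y))).
Proof.
apply: (heq_eqv_faithful E11) => //; first exact: mu_r_unit_mid.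
have snd_mid := kappa_snd_unit_mid.
rewrite fmap_inv_fmap /kappa_r; set k := kappa_snd p_tri q_tri.
rewrite /kappa_fst /p_tri /lunitor /to_Cid; simpl_cmp.
apply: heq_trans (heq_cast_l _ _) _; rewrite !cmp_assoc; apply: heq_cmp; first exact: heq_refl.
apply: heq_pair; rewrite ?cmp_fst ?cmp_snd ?phom_fst ?phom_snd; first by simpl_cmp; heq_auto.
by apply: heq_trans (heq_fmap mu snd_mid) _; simpl_cmp; heq_auto.
Qed.

Lemma assoc_via_triangle :
  cmp (fmap mu (fmap s (phom (idm x) (lunitor y) : @hom KK (x, otimes unit1 y) (x, y))))
      (assoc_via iso_p_tri iso_q_tri)
  = fmap mu (fmap s (phom (runitor x) (idm y) : @hom KK (otimes x unit1, y) (x, y))).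
Proof.
apply: heq_eq; rewrite /assoc_via (cmp_assoc (fmap mu (fmap s _))).
apply: heq_cmp_idm_l.
  apply: heq_trans (heq_fmap_cmpfV mu (iso_kappa_r iso_p_tri iso_q_tri) (heq_sym kappa_r_unit_mid)) _.
  exact: heq_idm (f_equal mu mu_r_unit_mid).
exact/(heq_trans (heq_cast_l _ _))/heq_fmap/kappa_l_unit_mid.
Qed.
End Triangle.
End Unit.

Section MonoidalStructure.
Variable H : HomotopyMonoid.
Local Notation C := (HC H).
Local Notation Cmap := (HCmap H).
Local Notation K := (HC H 1).
Local Notation KK := (ProdCat K K).
Local Notation C2K := (ProdCat (C 2) K).
Local Notation mu := (Cmap (dterm 2)).
Variables (E11 : EquivData (xi11 H)) (E21 : EquivData (xi21 H)).
Variables (E31 : EquivData (xi31 H)) (E0 : EquivData (xi0 H)).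
Local Notation s := (eqv_inv E11).
Local Notation otimes := (otimes E11).
Local Notation unit1 := (unit1 E0).

Definition cell3 (a b c : K) : C 3 := eqv_inv E21 ((s ((a, b) : KK), c) : C2K).
Definition cell3_fst (a b c : K) : hom (s ((a, b) : KK)) (xi21 H (cell3 a b c)).1 :=
  (counitV E21 ((s ((a, b) : KK), c) : C2K)).1.
Definition cell3_snd (a b c : K) : hom c (xi21 H (cell3 a b c)).2 :=
  (counitV E21 ((s ((a, b) : KK), c) : C2K)).2.

Lemma iso_cell3_fst a b c : is_iso (cell3_fst a b c). Proof. exact: (iso_fst (iso_counitV _ _)). Qed.
Lemma iso_cell3_snd a b c : is_iso (cell3_snd a b c). Proof. exact: (iso_snd (iso_counitV _ _)). Qed.

Definition associator (a b c : K) : hom (otimes (otimes a b) c) (otimes a (otimes b c)) :=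
  assoc_via (iso_cell3_fst a b c) (iso_cell3_snd a b c).

Lemma associator_natural (a b c a' b' c' : K) (f : hom a a') (g : hom b b') (h : hom c c') :
  cmp (associator a' b' c')
      (fmap mu (fmap s (phom (fmap mu (fmap s (phom f g : @hom KK (a, b) (a', b')))) h
                        : @hom KK (otimes a b, c) (otimes a' b', c'))))
  = cmp (fmap mu (fmap s (phom f (fmap mu (fmap s (phom g h : @hom KK (b, c) (b', c'))))
                          : @hom KK (a, otimes b c) (a', otimes b' c'))))
        (associator a b c).
Proof.
pose fgh := phom (fmap s (phom f g : @hom KK (a, b) (a', b'))) h
  : @hom C2K (s ((a, b) : KK), c) (s ((a', b') : KK), c').
apply: assoc_via_natural.
- by have := f_equal fst (counitV_natural E21 fgh); rewrite /cell3_fst /= => ->.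
- by have := f_equal snd (counitV_natural E21 fgh); rewrite /cell3_snd /= => ->.
Qed.

Lemma iso_associator a b c : is_iso (associator a b c).
Proof.
apply: iso_cmp; last by apply/iso_fmap/iso_inv.
by apply: iso_cmp; [apply/iso_fmap/(iso_kappa_l (iso_cell3_fst a b c) (iso_cell3_snd a b c)) | apply: iso_hom_of_eq].
Qed.

(* All five associators are computed from cells over one object of [C 4]
   lying over [(w, x, y, z)], which [assoc_via_indep] allows. *)
Lemma associator_pentagon (w x y z : K) :
  cmp (associator w x (otimes y z)) (associator (otimes w x) y z) =
  cmp (fmap mu (fmap s (phom (idm w) (associator x y z)
                        : @hom KK (w, otimes (otimes x y) z) (w, otimes x (otimes y z)))))
      (cmp (associator w (otimes x y) z)
           (fmap mu (fmap s (phom (associator w x y) (idm z)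
                             : @hom KK (otimes (otimes w x) y, z) (otimes w (otimes x y), z))))).
Proof.
pose psi := counitV E31 ((cell3 w x y, z) : ProdCat (C 3) K).
have Hpsi : is_iso psi := iso_counitV E31 _.
pose p0 := cmp (fmap (xi21 H) psi.1).1 (cell3_fst w x y).
pose q0 := cmp (fmap (xi21 H) psi.1).2 (cell3_snd w x y).
have Hp0 : is_iso p0 by apply: iso_cmp; [apply: iso_cell3_fst | apply/iso_fst/iso_fmap/iso_fst].
have Hq0 : is_iso q0 by apply: iso_cmp; [apply: iso_cell3_snd | apply/iso_snd/iso_fmap/iso_fst].
have Hr0 : is_iso psi.2 := iso_snd Hpsi.
rewrite /associator.
rewrite (assoc_via_indep E21 _ _ (iso_p_r Hp0) (iso_q_r E11 Hq0 Hr0)).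
rewrite (assoc_via_indep E21 _ _ (iso_p_l Hp0 Hq0) (iso_q_l Hr0)).
rewrite (assoc_via_indep E21 _ _ (iso_p_back Hp0 Hq0) (iso_q_back Hr0)).
rewrite (assoc_via_indep E21 _ _ (iso_p_m Hp0 Hq0) (iso_q_m Hr0)).
rewrite (assoc_via_indep E21 _ _ Hp0 Hq0).
exact: assoc_via_pentagon.
Qed.

Lemma associator_triangle (x y : K) :
  cmp (fmap mu (fmap s (phom (idm x) (lunitor E11 E0 y) : @hom KK (x, otimes unit1 y) (x, y))))
      (associator x unit1 y)
  = fmap mu (fmap s (phom (runitor E11 E0 x) (idm y) : @hom KK (otimes x unit1, y) (x, y))).
Proof.
rewrite /associator (assoc_via_indep E21 _ _ (iso_p_tri E11 E0 x y) (iso_q_tri E11 x y)).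
exact: assoc_via_triangle.
Qed.

Definition otimesF : Functor KK K := FComp mu s.

Definition associatorNT : NatTrans (AssocSrc otimesF) (AssocTgt otimesF).
Proof.
refine (@Build_NatTrans _ _ (AssocSrc otimesF) (AssocTgt otimesF)
  (fun abc => let: ((a, b), c) := abc in associator a b c) _).
by move=> [[a b] c] [[a' b'] c'] [[f g] h]; apply: esym (associator_natural f g h).
Defined.

Definition lunitorNT : NatTrans (LUnitSrc otimesF unit1) (FId K).
Proof.
refine (@Build_NatTrans K K (LUnitSrc otimesF unit1) (FId K) (lunitor E11 E0) _).
by move=> a b f; apply: esym (lunitor_natural E11 E0 f).
Defined.

Definition runitorNT : NatTrans (RUnitSrc otimesF unit1) (FId K).
Proof.
refine (@Build_NatTrans K K (RUnitSrc otimesF unit1) (FId K) (runitor E11 E0) _).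
by move=> a b f; apply: esym (runitor_natural E11 E0 f).
Defined.

Definition C1_monoidal : MonoidalStructure K.
Proof.
refine {| tensor := otimesF; munit := unit1; assoc := associatorNT;
          lunit := lunitorNT; runit := runitorNT |}.
- by move=> [[a b] c]; apply: iso_associator.
- exact: iso_lunitor.
- exact: iso_runitor.
- exact: associator_pentagon.
- exact: associator_triangle.
Defined.
End MonoidalStructure.

Theorem proposition3p3p1 (H : HomotopyMonoid) :
  inhabited (MonoidalStructure (HC H 1)).
Proof.
case: (equivalence_data (xi_equiv H 1 1)) => E11.
case: (equivalence_data (xi_equiv H 2 1)) => E21.
case: (equivalence_data (xi_equiv H 3 1)) => E31.
case: (equivalence_data (xi0_equiv H)) => E0.
exact: (inhabits (@C1_monoidal H E11 E21 E31 E0)).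
Qed.
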